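(* Let $\beta>0$, $0\le\alpha\le\beta$, and let $M$ be the set of global maximizers on $[-1,1]^2$ of \[ \Gamma(x):=\tfrac12\Big(\tfrac14\beta x_1^2+\tfrac14\beta x_2^2+\tfrac12\alpha x_1x_2\Big)-\tfrac12 I(x_1)-\tfrac12 I(x_2). \] Then for every $\varepsilon>0$ there is $c>0$ such that $\mu_{N,\alpha,\beta,S}\big(m\notin B_\varepsilon(M)\big)\le e^{-cN}$ for all sufficiently large $N$, where $m=(m_1,m_2)$ and $B_\varepsilon(M)$ is the union of open Euclidean balls of radius $\varepsilon$ around the points of $M$. Moreover: (i) if $\alpha+\beta\le 2$, then $(0,0)$ is the unique solution in $(-1,1)^2$ of the critical point equations $\frac12\beta x_1+\frac12\alpha x_2=\operatorname{artanh}(x_1)$, $\frac12\beta x_2+\frac12\alpha x_1=\operatorname{artanh}(x_2)$ (for $\alpha>0$), and $M=\{(0,0)\}$; in particular the law of $m$ converges weakly to $\delta_{(0,0)}$; (ii) if $\alpha+\beta>2$ and $\alpha>0$, then $M=\{(m^*,m^* ),(-m^*,-m^* )\}$, where $m^*>0$ is the positive solution of $\tanh\big(\frac{\alpha+\beta}{2}z\big)=z$.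
   Context: Block spin Ising model: $N$ is even, $S\subset\{1,\dots,N\}$ with $|S|=N/2$. Write $i\sim j$ if $i,j$ both lie in $S$ or both in $S^c$, $i\not\sim j$ otherwise. Hamiltonian $H_{N,\alpha,\beta,S}(\sigma)=-\frac{\beta}{2N}\sum_{i\sim j}\sigma_i\sigma_j-\frac{\alpha}{2N}\sum_{i\not\sim j}\sigma_i\sigma_j$ on $\{-1,+1\}^N$, Gibbs measure $\mu_{N,\alpha,\beta,S}(\sigma)\propto e^{-H_{N,\alpha,\beta,S}(\sigma)}$. Block magnetizations $m_1=\frac2N\sum_{i\in S}\sigma_i$, $m_2=\frac2N\sum_{i\notin S}\sigma_i$. $I(z):=\frac12(1+z)\log(1+z)+\frac12(1-z)\log(1-z)$ for $|z|\le1$. *)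

From Stdlib Require Import Reals Lra Lia List ClassicalEpsilon.
Import ListNotations.
Open Scope R_scope.

Definition sumR {A : Type} (l : list A) (f : A -> R) : R :=
  fold_right (fun a acc => f a + acc) 0 l.

(* the configuration space {-1,+1}^N, spins encoded as booleans:
   sigma_i = spin (nth i sigma false), indices i = 0..N-1 *)
Fixpoint cube (n : nat) : list (list bool) :=
  match n with
  | O => [[]]
  | S k => map (cons true) (cube k) ++ map (cons false) (cube k)
  end.

Definition spin (b : bool) : R := if b then 1 else -1.
Definition sig (sigma : list bool) (i : nat) : R := spin (nth i sigma false).

(* the block S ⊆ {0..N-1} is given by its indicator S : nat -> bool;
   |S| = N/2 *)
Definition card_block (N : nat) (S : nat -> bool) : nat :=
  length (filter S (seq 0 N)).
Definition valid_block (N : nat) (S : nat -> bool) : Prop :=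
  Nat.Even N /\ (2 * card_block N S)%nat = N.

Definition same_block (S : nat -> bool) (i j : nat) : bool := Bool.eqb (S i) (S j).

(* Hamiltonian; sums over all ordered pairs (i,j), i,j in {0..N-1} *)
Definition Ham (N : nat) (alpha beta : R) (S : nat -> bool) (sigma : list bool) : R :=
  - (beta / (2 * INR N)) *
      sumR (seq 0 N) (fun i => sumR (seq 0 N) (fun j =>
         if same_block S i j then sig sigma i * sig sigma j else 0))
  - (alpha / (2 * INR N)) *
      sumR (seq 0 N) (fun i => sumR (seq 0 N) (fun j =>
         if same_block S i j then 0 else sig sigma i * sig sigma j)).

Definition weight N alpha beta S sigma : R := exp (- Ham N alpha beta S sigma).
Definition partition_fn N alpha beta S : R :=
  sumR (cube N) (weight N alpha beta S).

Definition gibbs_prob N alpha beta S (A : list bool -> Prop) : R :=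
  sumR (cube N) (fun sigma =>
     match excluded_middle_informative (A sigma) with
     | left _ => weight N alpha beta S sigma
     | right _ => 0 end) / partition_fn N alpha beta S.

Definition gibbs_exp N alpha beta S (F : list bool -> R) : R :=
  sumR (cube N) (fun sigma => F sigma * weight N alpha beta S sigma)
    / partition_fn N alpha beta S.

Definition mag1 (N : nat) (S : nat -> bool) (sigma : list bool) : R :=
  (2 / INR N) * sumR (seq 0 N) (fun i => if S i then sig sigma i else 0).
Definition mag2 (N : nat) (S : nat -> bool) (sigma : list bool) : R :=
  (2 / INR N) * sumR (seq 0 N) (fun i => if S i then 0 else sig sigma i).

(* x log x with the convention 0 log 0 = 0 *)
Definition xlogx (x : R) : R := if Rle_dec x 0 then 0 else x * ln x.
Definition I_rate (z : R) : R := / 2 * xlogx (1 + z) + / 2 * xlogx (1 - z).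

Definition Gamma (alpha beta x1 x2 : R) : R :=
  / 2 * (/ 4 * beta * x1 ^ 2 + / 4 * beta * x2 ^ 2 + / 2 * alpha * x1 * x2)
  - / 2 * I_rate x1 - / 2 * I_rate x2.

Definition in_square (x1 x2 : R) : Prop := -1 <= x1 <= 1 /\ -1 <= x2 <= 1.

Definition is_global_max (alpha beta x1 x2 : R) : Prop :=
  in_square x1 x2 /\
  forall y1 y2, in_square y1 y2 -> Gamma alpha beta y1 y2 <= Gamma alpha beta x1 x2.

Definition in_nbhd_M (alpha beta eps y1 y2 : R) : Prop :=
  exists x1 x2, is_global_max alpha beta x1 x2 /\
    sqrt ((y1 - x1) ^ 2 + (y2 - x2) ^ 2) < eps.

Definition artanh (x : R) : R := / 2 * ln ((1 + x) / (1 - x)).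

Definition continuous2 (f : R -> R -> R) : Prop :=
  forall x1 x2 e, 0 < e -> exists d, 0 < d /\
    forall y1 y2, Rabs (y1 - x1) < d -> Rabs (y2 - x2) < d ->
      Rabs (f y1 y2 - f x1 x2) < e.
Definition bounded2 (f : R -> R -> R) : Prop :=
  exists B, forall x1 x2, Rabs (f x1 x2) <= B.

(** Proof idea: the Hamiltonian is a quadratic form in the two block sums, and the number of
    configurations with prescribed block sums is a product of two binomial coefficients, each
    equal to [2^n exp(-n I(m))] up to a factor [n+1] ([N = 2n]).  Hence the Gibbs weight of a
    pair of block magnetizations is proportional to [exp(N Gamma(m1,m2))] up to polynomial
    factors, and the probability of staying [eps]-away from the maximizers of [Gamma] decays
    exponentially.

    For the variational problem write [Gamma(x,y) = (g(x) + g(y))/2 - alpha/8 (x-y)^2] with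
    [g(x) = K/2 x^2 - I(x)] and [K = (alpha+beta)/2]: the maximizers of [Gamma] are the pairs
    of maximizers of [g], restricted to the diagonal when [alpha > 0].  Since
    [g'(x) = K x - artanh x] and [artanh z / z] increases from [1] on [(0,1)], [g] has the single
    maximizer [0] when [K <= 1], and exactly the two maximizers [+-mstar] with
    [artanh mstar = K mstar], i.e. [tanh (K mstar) = mstar], when [K > 1]. *)

From Stdlib Require Import Reals List Lra Lia ClassicalEpsilon Classical.
From Coquelicot Require Import Coquelicot.
Import ListNotations.
Open Scope R_scope.

(** * Finite sums *)

Lemma sumR_app {A} (l1 l2 : list A) f : sumR (l1 ++ l2) f = sumR l1 f + sumR l2 f.
Proof. induction l1; simpl; [ring | rewrite IHl1; ring]. Qed.

Lemma sumR_map {A B} (g : A -> B) l f : sumR (map g l) f = sumR l (fun x => f (g x)).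
Proof. induction l; simpl; [reflexivity | rewrite IHl; ring]. Qed.

Lemma sumR_ext {A} (l : list A) f g :
  (forall x, In x l -> f x = g x) -> sumR l f = sumR l g.
Proof.
  induction l; simpl; intros H; [reflexivity |].
  rewrite H, IHl by auto; reflexivity.
Qed.

Lemma sumR_plus {A} (l : list A) f g :
  sumR l (fun x => f x + g x) = sumR l f + sumR l g.
Proof. induction l; simpl; [ring | rewrite IHl; ring]. Qed.

Lemma sumR_scal {A} (l : list A) c f : sumR l (fun x => c * f x) = c * sumR l f.
Proof. induction l; simpl; [ring | rewrite IHl; ring]. Qed.

Lemma sumR_le {A} (l : list A) f g :
  (forall x, In x l -> f x <= g x) -> sumR l f <= sumR l g.
Proof.
  induction l; simpl; intros H; [lra |].
  assert (f a <= g a) by auto; assert (sumR l f <= sumR l g) by auto; lra.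
Qed.

Lemma sumR_nonneg {A} (l : list A) f : (forall x, In x l -> 0 <= f x) -> 0 <= sumR l f.
Proof.
  induction l; simpl; intros H; [lra |].
  assert (0 <= f a) by auto; assert (0 <= sumR l f) by auto; lra.
Qed.

Lemma sumR_ge_elem {A} (l : list A) f a :
  (forall x, In x l -> 0 <= f x) -> In a l -> f a <= sumR l f.
Proof.
  induction l; simpl; intros H Ha; [contradiction |].
  destruct Ha as [<- | Ha].
  - assert (0 <= sumR l f) by (apply sumR_nonneg; auto); lra.
  - assert (0 <= f a0) by auto; assert (f a <= sumR l f) by auto; lra.
Qed.

Lemma sumR_le_length_mul {A} (l : list A) f c :
  (forall x, In x l -> f x <= c) -> sumR l f <= INR (length l) * c.
Proof.
  induction l; intros H; simpl sumR; [simpl; lra |].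
  rewrite length_cons, S_INR.
  assert (f a <= c) by (apply H; left; auto).
  assert (sumR l f <= INR (length l) * c) by (apply IHl; intros; apply H; right; auto).
  lra.
Qed.

Lemma sumR_abs {A} (l : list A) f : Rabs (sumR l f) <= sumR l (fun x => Rabs (f x)).
Proof.
  induction l; simpl; [rewrite Rabs_R0; lra |].
  eapply Rle_trans; [apply Rabs_triang | lra].
Qed.

Lemma sumR_seq_S_l n (f : nat -> R) :
  sumR (seq 0 (S n)) f = f 0%nat + sumR (seq 0 n) (fun i => f (S i)).
Proof. simpl; rewrite <- seq_shift, sumR_map; reflexivity. Qed.

Lemma sumR_seq_S_r n (f : nat -> R) : sumR (seq 0 (S n)) f = sumR (seq 0 n) f + f n.
Proof. rewrite seq_S, sumR_app; simpl; ring. Qed.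

Lemma in_seq0 i n : In i (seq 0 n) <-> (i < n)%nat.
Proof. rewrite in_seq; lia. Qed.

(** * Binomial coefficients *)

(** Unlike Stdlib's real-valued [C], [binom n k] vanishes for [k > n], which makes
    Pascal's rule valid without side conditions. *)
Fixpoint binom (n k : nat) : nat :=
  match n, k with
  | _, O => 1%nat
  | O, S _ => 0%nat
  | S n', S k' => (binom n' k' + binom n' (S k'))%nat
  end.

Definition binomR n k := INR (binom n k).

Lemma binom_0 n : binom n 0 = 1%nat.
Proof. destruct n; reflexivity. Qed.

Lemma binom_1 n : binom n 1 = n.
Proof. induction n; simpl; [reflexivity | rewrite binom_0, IHn; lia]. Qed.

Lemma binom_gt n k : (n < k)%nat -> binom n k = 0%nat.
Proof.
  revert k; induction n; intros k Hk; destruct k; simpl; try lia; auto.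
  rewrite !IHn by lia; reflexivity.
Qed.

Lemma binom_succ_ratio n j : ((S j) * binom n (S j) = (n - j) * binom n j)%nat.
Proof.
  revert j; induction n; intros j; [destruct j; simpl; lia |].
  destruct j as [| j]; [simpl binom; rewrite binom_1, binom_0; simpl; lia |].
  change (binom (S n) (S (S j))) with (binom n (S j) + binom n (S (S j)))%nat.
  change (binom (S n) (S j)) with (binom n j + binom n (S j))%nat.
  specialize (IHn (S j)) as H2; specialize (IHn j) as H3.
  destruct (Nat.lt_ge_cases j n).
  - replace (S n - S j)%nat with (n - j)%nat in * by lia.
    destruct (n - S j)%nat eqn:Ed.
    + replace (n - j)%nat with 1%nat in * by lia; nia.
    + replace (n - j)%nat with (S (S n0)) in * by lia; nia.
  - rewrite (binom_gt n (S (S j))), (binom_gt n (S j)) by lia.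
    replace (S n - S j)%nat with (n - j)%nat by lia; nia.
Qed.

Lemma binomR_nonneg n k : 0 <= binomR n k.
Proof. apply pos_INR. Qed.

Lemma sumR_binom_pascal p (h : nat -> R) :
  sumR (seq 0 (S (S p))) (fun a => binomR (S p) a * h a)
  = sumR (seq 0 (S p)) (fun a => binomR p a * (h (S a) + h a)).
Proof.
  rewrite sumR_seq_S_l; unfold binomR at 1; rewrite binom_0.
  rewrite (sumR_ext _ _ (fun a => binomR p a * h (S a) + binomR p (S a) * h (S a)))
    by (intros x _; unfold binomR; simpl binom; rewrite plus_INR; ring).
  rewrite (sumR_ext _ (fun a => binomR p a * (h (S a) + h a))
             (fun a => binomR p a * h (S a) + binomR p a * h a)) by (intros; ring).
  rewrite !sumR_plus.
  assert (E : sumR (seq 0 (S p)) (fun a => binomR p (S a) * h (S a)) + binomR p 0 * h 0%nat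
              = sumR (seq 0 (S p)) (fun a => binomR p a * h a)).
  { rewrite (sumR_seq_S_l p (fun a => binomR p a * h a)),
            (sumR_seq_S_r p (fun a => binomR p (S a) * h (S a))).
    unfold binomR at 2; rewrite (binom_gt p (S p)) by lia; simpl INR; ring. }
  unfold binomR at 2 in E; rewrite binom_0 in E; simpl INR in *; lra.
Qed.

Lemma binomial_sumR x y n :
  (x + y) ^ n = sumR (seq 0 (S n)) (fun j => binomR n j * x ^ j * y ^ (n - j)).
Proof.
  induction n; [unfold binomR; simpl; ring |].
  rewrite (sumR_ext _ _ (fun j => binomR (S n) j * (x ^ j * y ^ (S n - j)))) by (intros; ring).
  rewrite sumR_binom_pascal; change ((x + y) ^ S n) with ((x + y) * (x + y) ^ n).
  rewrite IHn, <- sumR_scal.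
  apply sumR_ext; intros j Hj; apply in_seq0 in Hj.
  replace (S n - S j)%nat with (n - j)%nat by lia.
  replace (S n - j)%nat with (S (n - j)) by lia.
  simpl; ring.
Qed.

(** The [j]-th term of the binomial expansion of [n^n = (k + (n-k))^n]. *)
Definition binom_term n k j := binomR n j * INR k ^ j * INR (n - k) ^ (n - j).

Lemma binom_term_nonneg n k j : 0 <= binom_term n k j.
Proof.
  unfold binom_term.
  repeat apply Rmult_le_pos; try apply pow_le; try apply pos_INR; apply binomR_nonneg.
Qed.

Lemma sumR_binom_term n k : (k <= n)%nat -> sumR (seq 0 (S n)) (binom_term n k) = INR n ^ n.
Proof.
  intros Hk; unfold binom_term; rewrite <- binomial_sumR, <- plus_INR.
  do 3 f_equal; lia.
Qed.

Lemma binom_term_ratio n k j : (j < n)%nat ->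
  binom_term n k (S j) * INR (S j) * INR (n - k) = binom_term n k j * INR (n - j) * INR k.
Proof.
  intros Hj; unfold binom_term, binomR.
  assert (H := f_equal INR (binom_succ_ratio n j)); rewrite !mult_INR in H.
  replace (INR (n - k) ^ (n - j)) with (INR (n - k) * INR (n - k) ^ (n - S j))
    by (replace (n - j)%nat with (S (n - S j)) by lia; reflexivity).
  transitivity ((INR (S j) * INR (binom n (S j))) * INR k * INR k ^ j
                * INR (n - k) ^ (n - S j) * INR (n - k)); [simpl; ring |].
  rewrite H; ring.
Qed.

Lemma binom_term_mode n k j : (k <= n)%nat -> (j <= n)%nat ->
  binom_term n k j <= binom_term n k k.
Proof.
  intros Hk Hj.
  assert (Hnn := binom_term_nonneg n k).
  assert (up : forall j, (j < k)%nat -> binom_term n k j <= binom_term n k (S j)).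
  { intros i Hi; destruct (Nat.eq_dec k n) as [-> | Hkn].
    - unfold binom_term at 1; rewrite Nat.sub_diag.
      replace (n - i)%nat with (S (n - S i)) by lia; simpl; rewrite Rmult_0_l, Rmult_0_r.
      apply binom_term_nonneg.
    - assert (R := binom_term_ratio n k i ltac:(lia)).
      assert (0 < INR (S i) * INR (n - k)) by (apply Rmult_lt_0_compat; apply lt_0_INR; lia).
      assert (INR (S i) * INR (n - k) <= INR (n - i) * INR k)
        by (rewrite <- !mult_INR; apply le_INR; nia).
      specialize (Hnn i); specialize (binom_term_nonneg n k (S i)); nra. }
  assert (down : forall j, (k <= j)%nat -> (j < n)%nat ->
                   binom_term n k (S j) <= binom_term n k j).
  { intros i Hi Hin; assert (R := binom_term_ratio n k i Hin).
    assert (0 < INR (S i) * INR (n - k)) by (apply Rmult_lt_0_compat; apply lt_0_INR; lia).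
    assert (INR (n - i) * INR k <= INR (S i) * INR (n - k))
      by (rewrite <- !mult_INR; apply le_INR; nia).
    specialize (Hnn i); specialize (binom_term_nonneg n k (S i)); nra. }
  destruct (Nat.le_ge_cases j k) as [Hjk | Hjk].
  - replace j with (k - (k - j))%nat by lia.
    induction (k - j)%nat as [| d IH]; [rewrite Nat.sub_0_r; lra |].
    destruct (Nat.le_gt_cases (S d) k).
    + eapply Rle_trans; [| exact IH].
      replace (k - d)%nat with (S (k - S d)) by lia; apply up; lia.
    + replace (k - S d)%nat with (k - d)%nat by lia; exact IH.
  - replace j with (k + (j - k))%nat in * by lia.
    induction (j - k)%nat as [| d IH]; [rewrite Nat.add_0_r; lra |].
    eapply Rle_trans; [| apply IH; lia].
    rewrite Nat.add_succ_r; apply down; lia.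
Qed.

Lemma binom_term_mode_bounds n k : (k <= n)%nat ->
  binom_term n k k <= INR n ^ n <= INR (S n) * binom_term n k k.
Proof.
  intros Hk; rewrite <- (sumR_binom_term n k Hk); split.
  - apply sumR_ge_elem; [intros; apply binom_term_nonneg | apply in_seq0; lia].
  - rewrite <- (length_seq (S n) 0) at 2; apply sumR_le_length_mul.
    intros j Hj; apply in_seq0 in Hj; apply binom_term_mode; lia.
Qed.

(** * Reduction to the block sums *)

Definition block_in (S : nat -> bool) N sigma :=
  sumR (seq 0 N) (fun i => if S i then sig sigma i else 0).
Definition block_out (S : nat -> bool) N sigma :=
  sumR (seq 0 N) (fun i => if S i then 0 else sig sigma i).
Definition card_coblock N (S : nat -> bool) :=
  length (filter (fun i => negb (S i)) (seq 0 N)).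

(** [a] (resp. [b]) is the number of [+1] spins in a block of size [p] (resp. [q]). *)
Definition lattice_sum p q (g : R -> R -> R) :=
  sumR (seq 0 (Datatypes.S p)) (fun a => binomR p a *
    sumR (seq 0 (Datatypes.S q)) (fun b =>
      binomR q b * g (2 * INR a - INR p) (2 * INR b - INR q))).

Lemma length_filter_map_S (f : nat -> bool) l :
  length (filter f (map Datatypes.S l)) = length (filter (fun i => f (Datatypes.S i)) l).
Proof. induction l; simpl; auto; destruct (f (Datatypes.S a)); simpl; auto. Qed.

Lemma card_block_S N S : card_block (Datatypes.S N) S =
  ((if S 0%nat then 1 else 0) + card_block N (fun i => S (Datatypes.S i)))%nat.
Proof.
  unfold card_block; simpl; rewrite <- seq_shift.
  destruct (S 0%nat); simpl; rewrite length_filter_map_S; auto.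
Qed.

Lemma card_coblock_S N S : card_coblock (Datatypes.S N) S =
  ((if S 0%nat then 0 else 1) + card_coblock N (fun i => S (Datatypes.S i)))%nat.
Proof.
  unfold card_coblock; simpl; rewrite <- seq_shift.
  destruct (S 0%nat); simpl; rewrite length_filter_map_S; auto.
Qed.

Lemma card_block_add_coblock N S : (card_block N S + card_coblock N S)%nat = N.
Proof.
  revert S; induction N; intros S; [reflexivity |].
  rewrite card_block_S, card_coblock_S.
  specialize (IHN (fun i => S (Datatypes.S i))); destruct (S 0%nat); lia.
Qed.

Lemma block_in_cons S N b tau : block_in S (Datatypes.S N) (b :: tau) =
  (if S 0%nat then spin b else 0) + block_in (fun i => S (Datatypes.S i)) N tau.
Proof. unfold block_in; rewrite sumR_seq_S_l; reflexivity. Qed.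

Lemma block_out_cons S N b tau : block_out S (Datatypes.S N) (b :: tau) =
  (if S 0%nat then 0 else spin b) + block_out (fun i => S (Datatypes.S i)) N tau.
Proof. unfold block_out; rewrite sumR_seq_S_l; reflexivity. Qed.

Lemma sumR_cube_blocks N S (g : R -> R -> R) :
  sumR (cube N) (fun sigma => g (block_in S N sigma) (block_out S N sigma))
  = lattice_sum (card_block N S) (card_coblock N S) g.
Proof.
  revert S g; induction N; intros S g.
  { unfold lattice_sum, card_block, card_coblock, block_in, block_out, binomR; simpl.
    replace (2 * 0 - 0) with 0 by ring; ring. }
  simpl cube; rewrite sumR_app, !sumR_map; cbv beta.
  set (S' := fun i => S (Datatypes.S i)).
  rewrite (sumR_ext _ _ (fun x => g ((if S 0%nat then 1 else 0) + block_in S' N x)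
                                    ((if S 0%nat then 0 else 1) + block_out S' N x)))
    by (intros; cbv beta; rewrite block_in_cons, block_out_cons; reflexivity).
  rewrite (sumR_ext _ (fun x => g (block_in S (Datatypes.S N) (false :: x))
                               (block_out S (Datatypes.S N) (false :: x)))
                      (fun x => g ((if S 0%nat then -1 else 0) + block_in S' N x)
                                    ((if S 0%nat then 0 else -1) + block_out S' N x)))
    by (intros; cbv beta; rewrite block_in_cons, block_out_cons; reflexivity).
  rewrite (IHN _ (fun x y => g ((if S 0%nat then 1 else 0) + x) ((if S 0%nat then 0 else 1) + y))).
  rewrite (IHN _ (fun x y => g ((if S 0%nat then -1 else 0) + x)
                              ((if S 0%nat then 0 else -1) + y))).
  rewrite card_block_S, card_coblock_S; fold S'.
  unfold lattice_sum; destruct (S 0%nat); simpl Nat.add.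
  - rewrite sumR_binom_pascal, <- sumR_plus; apply sumR_ext; intros a _.
    rewrite <- Rmult_plus_distr_l; do 2 f_equal; apply sumR_ext; intros b _;
      do 2 f_equal; rewrite ?S_INR; ring.
  - rewrite <- sumR_plus; apply sumR_ext; intros a _.
    rewrite <- Rmult_plus_distr_l, sumR_binom_pascal, <- sumR_plus; f_equal.
    apply sumR_ext; intros b _; rewrite Rmult_plus_distr_l.
    do 3 f_equal; rewrite ?S_INR; ring.
Qed.

Lemma sumR_same_block S N sigma i :
  sumR (seq 0 N) (fun j => if same_block S i j then sig sigma i * sig sigma j else 0)
  = sig sigma i * (if S i then block_in S N sigma else block_out S N sigma).
Proof.
  unfold block_in, block_out, same_block.
  destruct (S i); rewrite <- sumR_scal; apply sumR_ext; intros j _; destruct (S j); simpl; ring.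
Qed.

Lemma sumR_other_block S N sigma i :
  sumR (seq 0 N) (fun j => if same_block S i j then 0 else sig sigma i * sig sigma j)
  = sig sigma i * (if S i then block_out S N sigma else block_in S N sigma).
Proof.
  unfold block_in, block_out, same_block.
  destruct (S i); rewrite <- sumR_scal; apply sumR_ext; intros j _; destruct (S j); simpl; ring.
Qed.

Lemma Ham_blocks N alpha beta S sigma :
  Ham N alpha beta S sigma =
  - (beta / (2 * INR N)) * (block_in S N sigma ^ 2 + block_out S N sigma ^ 2)
  - (alpha / (2 * INR N)) * (2 * block_in S N sigma * block_out S N sigma).
Proof.
  unfold Ham.
  rewrite (sumR_ext _ _ _ (fun i _ => sumR_same_block S N sigma i)),
          (sumR_ext _ _ _ (fun i _ => sumR_other_block S N sigma i)).
  set (A := block_in S N sigma); set (B := block_out S N sigma).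
  assert (split_sum : forall u v, sumR (seq 0 N) (fun i => sig sigma i * (if S i then u else v))
                                  = u * A + v * B).
  { intros u v.
    rewrite (sumR_ext _ _ (fun i => u * (if S i then sig sigma i else 0)
                                    + v * (if S i then 0 else sig sigma i)))
      by (intros i _; destruct (S i); ring).
    rewrite sumR_plus, !sumR_scal; reflexivity. }
  rewrite !split_sum; ring.
Qed.

(** * The entropy function and [artanh] *)

Lemma strict_incr_of_deriv_pos (f df : R -> R) a b : a < b ->
  (forall x, a <= x <= b -> continuity_pt f x) ->
  (forall x, a < x < b -> derivable_pt_lim f x (df x)) ->
  (forall x, a < x < b -> 0 < df x) -> f a < f b.
Proof.
  intros Hab Hc Hd Hp.
  pose (pr1 := fun c (P : a < c < b) => exist (fun l => derivable_pt_lim f c l) (df c) (Hd c P)).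
  pose (pr2 := fun c (_ : a < c < b) => derivable_pt_id c).
  destruct (MVT f id a b pr1 pr2 Hab Hc
              (fun c _ => derivable_continuous_pt _ _ (derivable_pt_id c))) as [c [P E]].
  unfold pr1, pr2 in E; simpl in E; rewrite derive_pt_id in E; unfold id in E.
  assert (0 < df c) by (apply Hp; auto); nra.
Qed.

Lemma derivable_pt_lim_continuity_pt f x l : derivable_pt_lim f x l -> continuity_pt f x.
Proof. intros H; apply derivable_continuous_pt; exists l; exact H. Qed.

Lemma continuity_pt_eps f x : continuity_pt f x -> forall e, 0 < e ->
  exists d, 0 < d /\ forall y, Rabs (y - x) < d -> Rabs (f y - f x) < e.
Proof.
  intros Hc e He; destruct (Hc e He) as [d [Hd H]]; exists d; split; auto.
  intros y Hy; destruct (Req_dec y x) as [-> | Hne].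
  - rewrite Rminus_diag, Rabs_R0; auto.
  - apply (H y); repeat split; auto.
Qed.

Lemma locally_interval a b x (P : R -> Prop) : a < x < b ->
  (forall y, a < y < b -> P y) -> locally x P.
Proof.
  intros Hx HP; assert (Hp : 0 < Rmin (b - x) (x - a)) by (apply Rmin_pos; lra).
  exists (mkposreal _ Hp); intros y Hy; simpl in Hy.
  unfold ball in Hy; simpl in Hy; unfold AbsRing_ball, abs, minus, plus, opp in Hy; simpl in Hy.
  apply Rabs_def2 in Hy.
  assert (H1 := Rmin_l (b - x) (x - a)); assert (H2 := Rmin_r (b - x) (x - a)).
  apply HP; lra.
Qed.

Lemma derivable_pt_lim_interval (f g : R -> R) x l a b : a < x < b ->
  (forall y, a < y < b -> g y = f y) -> is_derive g x l -> derivable_pt_lim f x l.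
Proof.
  intros Hx Hfg Hd; apply is_derive_Reals, (is_derive_ext_loc g); auto.
  apply (locally_interval a b); auto.
Qed.

Lemma exp_le_compat x y : x <= y -> exp x <= exp y.
Proof. intros [H | ->]; [apply Rlt_le, exp_increasing; auto | lra]. Qed.

Lemma xlogx_pos y : 0 < y -> xlogx y = y * ln y.
Proof. intros; unfold xlogx; destruct (Rle_dec y 0); [lra | reflexivity]. Qed.

Lemma xlogx_nonpos y : y <= 0 -> xlogx y = 0.
Proof. intros; unfold xlogx; destruct (Rle_dec y 0); [reflexivity | lra]. Qed.

Lemma ln_le_sub_1 y : 0 < y -> ln y <= y - 1.
Proof. intros Hy; assert (H := exp_ineq1_le (ln y)); rewrite exp_ln in H; lra. Qed.

Lemma Rabs_xlogx_le x : 0 < x <= 1 -> Rabs (xlogx x) <= 2 * sqrt x.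
Proof.
  intros Hx; rewrite xlogx_pos by lra.
  assert (Hs : 0 < sqrt x) by (apply sqrt_lt_R0; lra).
  assert (Hss := sqrt_sqrt x ltac:(lra)).
  assert (ln x <= 0) by (rewrite <- ln_1; apply ln_le; lra).
  assert (ln x = 2 * ln (sqrt x)) by (rewrite <- Hss at 1; rewrite ln_mult by lra; ring).
  (* [|x ln x| = 2 x ln (1 / sqrt x) <= 2 x (1 / sqrt x - 1) <= 2 sqrt x] *)
  assert (Hl := ln_le_sub_1 (/ sqrt x) ltac:(apply Rinv_0_lt_compat; lra)).
  rewrite ln_Rinv in Hl by lra.
  assert (x * / sqrt x = sqrt x) by (rewrite <- Hss at 1; field; lra).
  rewrite Rabs_left1 by nra; nra.
Qed.

Lemma xlogx_continuity_pt t : continuity_pt xlogx t.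
Proof.
  destruct (Rlt_le_dec 0 t) as [Ht | Ht].
  { apply continuity_pt_filterlim, (continuous_ext_loc _ (fun y => y * ln y)).
    - apply (locally_interval 0 (t + 1)); [lra |]; intros y Hy; symmetry; apply xlogx_pos; lra.
    - apply (@ex_derive_continuous R_AbsRing R_NormedModule); auto_derive; lra. }
  destruct (Rle_lt_or_eq_dec _ _ Ht) as [Ht' | ->].
  { apply continuity_pt_filterlim, (continuous_ext_loc _ (fun _ => 0)).
    - apply (locally_interval (t - 1) 0); [lra |]; intros y Hy; symmetry; apply xlogx_nonpos; lra.
    - apply continuous_const. }
  unfold continuity_pt, continue_in, limit1_in, limit_in; simpl; unfold R_dist.
  intros e He; exists (Rmin 1 (e * e / 4)); split; [apply Rmin_pos; nra |].
  intros x [_ Hx]; rewrite Rminus_0_r in Hx; rewrite (xlogx_nonpos 0), Rminus_0_r by lra.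
  assert (Hm1 := Rmin_l 1 (e * e / 4)); assert (Hm2 := Rmin_r 1 (e * e / 4)).
  apply Rabs_def2 in Hx.
  destruct (Rle_dec x 0) as [Hx0 | Hx0]; [rewrite xlogx_nonpos, Rabs_R0 by lra; lra |].
  eapply Rle_lt_trans; [apply Rabs_xlogx_le; lra |].
  assert (Hs := sqrt_sqrt x ltac:(lra)); assert (0 <= sqrt x) by apply sqrt_pos; nra.
Qed.

Lemma I_rate_continuous z : continuous I_rate z.
Proof.
  assert (Hc : forall u, continuous xlogx u)
    by (intros; apply continuity_pt_filterlim, xlogx_continuity_pt).
  unfold I_rate.
  apply (continuous_plus (fun z => / 2 * xlogx (1 + z)) (fun z => / 2 * xlogx (1 - z))).
  - apply (continuous_mult (fun _ => / 2)); [apply continuous_const |].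
    apply (continuous_comp (fun z => 1 + z) xlogx); [| apply Hc].
    apply (continuous_plus (fun _ => 1)); [apply continuous_const | apply continuous_id].
  - apply (continuous_mult (fun _ => / 2)); [apply continuous_const |].
    apply (continuous_comp (fun z => 1 - z) xlogx); [| apply Hc].
    apply (continuous_minus (fun _ => 1)); [apply continuous_const | apply continuous_id].
Qed.

Lemma I_rate_opp z : I_rate (- z) = I_rate z.
Proof.
  unfold I_rate; replace (1 + - z) with (1 - z) by ring; replace (1 - - z) with (1 + z) by ring.
  ring.
Qed.

Lemma I_rate_0 : I_rate 0 = 0.
Proof. unfold I_rate; rewrite Rplus_0_r, Rminus_0_r, xlogx_pos, ln_1 by lra; ring. Qed.

Lemma artanh_ln x : -1 < x < 1 -> artanh x = / 2 * (ln (1 + x) - ln (1 - x)).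
Proof.
  intros; unfold artanh, Rdiv.
  rewrite ln_mult, ln_Rinv by (try apply Rinv_0_lt_compat; lra); ring.
Qed.

Lemma I_rate_derivative x : -1 < x < 1 -> derivable_pt_lim I_rate x (artanh x).
Proof.
  intros Hx.
  apply (derivable_pt_lim_interval _
           (fun y => / 2 * ((1 + y) * ln (1 + y)) + / 2 * ((1 - y) * ln (1 - y))) x _ (-1) 1);
    auto.
  { intros y Hy; unfold I_rate; rewrite !xlogx_pos by lra; reflexivity. }
  auto_derive; [lra |].
  replace (1 + - x) with (1 - x) by ring; rewrite artanh_ln by lra; field; lra.
Qed.

Lemma artanh_derivative x : -1 < x < 1 -> derivable_pt_lim artanh x (/ (1 - x ^ 2)).
Proof.
  intros Hx.
  apply (derivable_pt_lim_interval _ (fun y => / 2 * (ln (1 + y) - ln (1 - y))) x _ (-1) 1); auto.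
  { intros y Hy; rewrite artanh_ln by lra; reflexivity. }
  auto_derive; [lra |]; field; repeat split; try lra; nra.
Qed.

Lemma artanh_0 : artanh 0 = 0.
Proof. unfold artanh; replace ((1 + 0) / (1 - 0)) with 1 by field; rewrite ln_1; ring. Qed.

Lemma artanh_opp x : -1 < x < 1 -> artanh (- x) = - artanh x.
Proof.
  intros; rewrite !artanh_ln by lra.
  replace (1 + - x) with (1 - x) by ring; replace (1 - - x) with (1 + x) by ring; ring.
Qed.

Lemma artanh_gt_id x : 0 < x < 1 -> x < artanh x.
Proof.
  intros Hx.
  assert (H : artanh 0 - 0 < artanh x - x).
  { apply (strict_incr_of_deriv_pos (fun t => artanh t - t) (fun t => / (1 - t ^ 2) - 1));
      try lra.
    - intros t Ht; apply (derivable_pt_lim_continuity_pt _ _ (/ (1 - t ^ 2) - 1)).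
      apply derivable_pt_lim_minus; [apply artanh_derivative; lra | apply derivable_pt_lim_id].
    - intros t Ht; apply derivable_pt_lim_minus;
        [apply artanh_derivative; lra | apply derivable_pt_lim_id].
    - intros t Ht; assert (0 < 1 - t ^ 2 < 1) by nra.
      assert (1 < / (1 - t ^ 2)) by (rewrite <- Rinv_1; apply Rinv_lt_contravar; lra); lra. }
  rewrite artanh_0 in H; lra.
Qed.

Lemma Rabs_lt_Rabs_artanh x : -1 < x < 1 -> x <> 0 -> Rabs x < Rabs (artanh x).
Proof.
  intros Hx Hx0; destruct (Rlt_le_dec 0 x) as [Hp | Hn].
  - assert (H := artanh_gt_id x ltac:(lra)); rewrite !Rabs_right by lra; lra.
  - assert (H := artanh_gt_id (- x) ltac:(lra)).
    rewrite artanh_opp in H by lra; rewrite !Rabs_left by lra; lra.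
Qed.

Lemma artanh_lt z : 0 < z < 1 -> artanh z < z / (1 - z ^ 2).
Proof.
  intros Hz.
  assert (Hd : forall t, -1 < t < 1 ->
            derivable_pt_lim (fun t => t / (1 - t ^ 2) - artanh t) t (2 * t ^ 2 / (1 - t ^ 2) ^ 2)).
  { intros t Ht.
    apply (derivable_pt_lim_interval _ (fun y => y / (1 - y ^ 2) - / 2 * (ln (1 + y) - ln (1 - y)))
             t _ (-1) 1); auto.
    { intros y Hy; rewrite artanh_ln by lra; reflexivity. }
    auto_derive; [repeat split; try lra; nra |]; field; repeat split; try lra; nra. }
  assert (H : 0 / (1 - 0 ^ 2) - artanh 0 < z / (1 - z ^ 2) - artanh z).
  { apply (strict_incr_of_deriv_pos (fun t => t / (1 - t ^ 2) - artanh t)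
           (fun t => 2 * t ^ 2 / (1 - t ^ 2) ^ 2)); try lra.
    - intros t Ht; apply (derivable_pt_lim_continuity_pt _ _ _ (Hd t ltac:(lra))).
    - intros t Ht; apply Hd; lra.
    - intros t Ht; assert (0 < 1 - t ^ 2) by nra; apply Rdiv_lt_0_compat; nra. }
  rewrite artanh_0 in H; replace (0 / (1 - 0 ^ 2)) with 0 in H by field; lra.
Qed.

Definition artanh_quot (z : R) := artanh z / z.

Lemma artanh_quot_derivative t : 0 < t < 1 ->
  derivable_pt_lim artanh_quot t ((t / (1 - t ^ 2) - artanh t) / t ^ 2).
Proof.
  intros Ht.
  apply (derivable_pt_lim_interval _ (fun y => / 2 * (ln (1 + y) - ln (1 - y)) / y) t _ 0 1);
    auto.
  { intros y Hy; unfold artanh_quot; rewrite artanh_ln by lra; reflexivity. }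
  auto_derive; [repeat split; lra |].
  replace (1 + - t) with (1 - t) by ring; rewrite artanh_ln by lra.
  field; repeat split; try lra; nra.
Qed.

Lemma artanh_quot_incr z1 z2 : 0 < z1 -> z1 < z2 -> z2 < 1 -> artanh_quot z1 < artanh_quot z2.
Proof.
  intros H1 H2 H3.
  apply (strict_incr_of_deriv_pos _ (fun t => (t / (1 - t ^ 2) - artanh t) / t ^ 2)); auto.
  - intros t Ht; apply (derivable_pt_lim_continuity_pt _ _ _ (artanh_quot_derivative t ltac:(lra))).
  - intros t Ht; apply artanh_quot_derivative; lra.
  - intros t Ht; assert (artanh t < t / (1 - t ^ 2)) by (apply artanh_lt; lra).
    apply Rdiv_lt_0_compat; nra.
Qed.

Lemma artanh_quot_inj z1 z2 : 0 < z1 < 1 -> 0 < z2 < 1 ->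
  artanh_quot z1 = artanh_quot z2 -> z1 = z2.
Proof.
  intros H1 H2 E; destruct (Rtotal_order z1 z2) as [h | [h | h]]; auto.
  - assert (artanh_quot z1 < artanh_quot z2) by (apply artanh_quot_incr; lra); lra.
  - assert (artanh_quot z2 < artanh_quot z1) by (apply artanh_quot_incr; lra); lra.
Qed.

Lemma artanh_quot_surj K : 1 < K -> exists z, 0 < z < 1 /\ artanh_quot z = K.
Proof.
  intros HK.
  (* Intermediate values between [z0 = sqrt (1 - 1/K)], where [artanh_quot z0 < K] by
     [artanh_lt], and [z1 = tanh K], where [artanh_quot z1 = K / z1 > K]. *)
  set (z0 := sqrt (1 - / K)).
  assert (HiK : 0 < / K < 1)
    by (split; [apply Rinv_0_lt_compat; lra | rewrite <- Rinv_1; apply Rinv_lt_contravar; lra]).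
  assert (Hz0sq : z0 * z0 = 1 - / K) by (apply sqrt_sqrt; lra).
  assert (Hz0 : 0 < z0 < 1) by (assert (0 < z0) by (apply sqrt_lt_R0; lra); nra).
  assert (Hr0 : artanh_quot z0 < K).
  { assert (H := artanh_lt z0 Hz0); unfold artanh_quot.
    apply (Rmult_lt_reg_r z0); [lra |].
    replace (1 - z0 ^ 2) with (/ K) in H by (simpl; lra).
    unfold Rdiv in *; rewrite Rinv_inv in H; rewrite Rmult_assoc, Rinv_l, Rmult_1_r by lra; lra. }
  set (E := exp (2 * K)).
  assert (HE : 1 < E) by (unfold E; assert (H := exp_ineq1_le (2 * K)); lra).
  set (z1 := (E - 1) / (E + 1)).
  assert (Hz1 : 0 < z1 < 1).
  { unfold z1; split; [apply Rdiv_lt_0_compat; lra |].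
    apply (Rmult_lt_reg_r (E + 1)); [lra |]; unfold Rdiv; rewrite Rmult_assoc, Rinv_l; lra. }
  assert (Ha1 : artanh z1 = K).
  { unfold artanh; replace ((1 + z1) / (1 - z1)) with E by (unfold z1; field; lra).
    unfold E; rewrite ln_exp; field. }
  assert (Hr1 : K < artanh_quot z1).
  { unfold artanh_quot; rewrite Ha1; apply (Rmult_lt_reg_r z1); [lra |].
    unfold Rdiv; rewrite Rmult_assoc, Rinv_l, Rmult_1_r by lra; nra. }
  assert (Hlt : z0 < z1).
  { destruct (Rlt_le_dec z0 z1) as [h | h]; auto; exfalso.
    destruct (Rle_lt_or_eq_dec _ _ h) as [h' | h']; [| rewrite h' in Hr1; lra].
    assert (artanh_quot z1 < artanh_quot z0) by (apply artanh_quot_incr; lra); lra. }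
  destruct (Ranalysis5.IVT_interv (fun z => artanh_quot z - K) z0 z1) as [z [Hz Ez]];
    auto; try lra.
  - intros a Ha; apply continuity_pt_minus; [| apply continuity_pt_const; intros u v; reflexivity].
    apply (derivable_pt_lim_continuity_pt _ _ _ (artanh_quot_derivative a ltac:(lra))).
  - exists z; split; lra.
Qed.

Lemma tanh_bounds y : -1 < tanh y < 1.
Proof.
  unfold tanh, sinh, cosh; rewrite exp_Ropp; set (e := exp y).
  assert (He : 0 < e) by apply exp_pos.
  replace ((e - / e) / 2 / ((e + / e) / 2)) with ((e * e - 1) / (e * e + 1)) by (field; nra).
  assert (0 < e * e + 1) by nra.
  split; apply (Rmult_lt_reg_r (e * e + 1)); auto;
    unfold Rdiv; rewrite Rmult_assoc, Rinv_l by lra; nra.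
Qed.

Lemma tanh_artanh z : -1 < z < 1 -> tanh (artanh z) = z.
Proof.
  intros Hz; unfold tanh, sinh, cosh; set (e := exp (artanh z)).
  assert (He : 0 < e) by apply exp_pos.
  assert (Hee : e * e = (1 + z) / (1 - z)).
  { unfold e; rewrite <- exp_plus.
    replace (artanh z + artanh z) with (ln ((1 + z) / (1 - z))) by (unfold artanh; field).
    apply exp_ln, Rdiv_lt_0_compat; lra. }
  rewrite exp_Ropp; fold e.
  replace ((e - / e) / 2 / ((e + / e) / 2)) with ((e * e - 1) / (e * e + 1)) by (field; nra).
  rewrite Hee; field; lra.
Qed.

Lemma artanh_tanh y : artanh (tanh y) = y.
Proof.
  unfold artanh; replace ((1 + tanh y) / (1 - tanh y)) with (exp (y + y)).
  - rewrite ln_exp; field.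
  - unfold tanh, sinh, cosh; rewrite exp_Ropp, exp_plus; set (e := exp y).
    assert (0 < e) by apply exp_pos; field; nra.
Qed.

Lemma tanh_fixpoint_iff K z : 0 < z ->
  tanh (K * z) = z <-> z < 1 /\ artanh_quot z = K.
Proof.
  intros Hz; unfold artanh_quot; split.
  - intros E; assert (H := tanh_bounds (K * z)); split; [lra |].
    rewrite <- E at 1; rewrite artanh_tanh; field; lra.
  - intros [H1 H2]; replace (K * z) with (artanh z) by (rewrite <- H2; field; lra).
    apply tanh_artanh; lra.
Qed.

(** * Maximizers of [Gamma] *)

Definition Gamma1 (K x : R) := K / 2 * x ^ 2 - I_rate x.

Lemma Gamma1_continuity_pt K x : continuity_pt (Gamma1 K) x.
Proof.
  apply continuity_pt_filterlim; unfold Gamma1.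
  apply (continuous_minus (fun x => K / 2 * x ^ 2) I_rate); [| apply I_rate_continuous].
  apply (@ex_derive_continuous R_AbsRing R_NormedModule); auto_derive; auto.
Qed.

Lemma Gamma1_derivative K x : -1 < x < 1 -> derivable_pt_lim (Gamma1 K) x (K * x - artanh x).
Proof.
  intros Hx; apply (derivable_pt_lim_minus (fun x => K / 2 * x ^ 2) I_rate).
  - apply is_derive_Reals; auto_derive; auto; field.
  - apply I_rate_derivative; auto.
Qed.

Lemma Gamma1_Rabs K x : Gamma1 K (Rabs x) = Gamma1 K x.
Proof. unfold Gamma1, Rabs; destruct (Rcase_abs x); [rewrite I_rate_opp |]; ring. Qed.

Lemma Gamma1_0 K : Gamma1 K 0 = 0.
Proof. unfold Gamma1; rewrite I_rate_0; ring. Qed.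

Lemma Gamma1_incr K a b : 0 <= a -> a < b -> b <= 1 ->
  (forall x, a < x < b -> artanh x < K * x) -> Gamma1 K a < Gamma1 K b.
Proof.
  intros Ha Hab Hb Hx.
  apply (strict_incr_of_deriv_pos _ (fun x => K * x - artanh x)); auto.
  - intros x _; apply Gamma1_continuity_pt.
  - intros x ?; apply Gamma1_derivative; lra.
  - intros x ?; specialize (Hx x); lra.
Qed.

Lemma Gamma1_decr K a b : 0 <= a -> a < b -> b <= 1 ->
  (forall x, a < x < b -> K * x < artanh x) -> Gamma1 K b < Gamma1 K a.
Proof.
  intros Ha Hab Hb Hx.
  enough (- Gamma1 K a < - Gamma1 K b) by lra.
  apply (strict_incr_of_deriv_pos (fun x => - Gamma1 K x) (fun x => artanh x - K * x)); auto.
  - intros x _; apply continuity_pt_opp, Gamma1_continuity_pt.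
  - intros x ?; replace (artanh x - K * x) with (- (K * x - artanh x)) by ring.
    apply derivable_pt_lim_opp, Gamma1_derivative; lra.
  - intros x ?; specialize (Hx x); lra.
Qed.

Lemma Gamma1_incr_below K z a b : 0 < z < 1 -> artanh_quot z = K ->
  0 <= a -> a < b -> b <= z -> Gamma1 K a < Gamma1 K b.
Proof.
  intros Hz Hr Ha Hab Hb; apply Gamma1_incr; try lra.
  intros x Hx; assert (H := artanh_quot_incr x z ltac:(lra) ltac:(lra) ltac:(lra)).
  unfold artanh_quot in *; rewrite <- Hr.
  apply (Rmult_lt_reg_r (/ x)); [apply Rinv_0_lt_compat; lra |].
  replace (artanh z / z * x * / x) with (artanh z / z) by (field; lra); exact H.
Qed.

Lemma Gamma1_decr_above K z a b : 0 < z < 1 -> artanh_quot z = K ->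
  z <= a -> a < b -> b <= 1 -> Gamma1 K b < Gamma1 K a.
Proof.
  intros Hz Hr Ha Hab Hb; apply Gamma1_decr; try lra.
  intros x Hx; assert (H := artanh_quot_incr z x ltac:(lra) ltac:(lra) ltac:(lra)).
  unfold artanh_quot in *; rewrite <- Hr.
  apply (Rmult_lt_reg_r (/ x)); [apply Rinv_0_lt_compat; lra |].
  replace (artanh z / z * x * / x) with (artanh z / z) by (field; lra); exact H.
Qed.

Record Gamma1_argmax (K Gm : R) (Am : list R) (s : R) : Prop := {
  argmax_sep_pos : 0 < s;
  argmax_inhabited : exists a, In a Am;
  argmax_value : forall a, In a Am -> -1 <= a <= 1 /\ Gamma1 K a = Gm;
  argmax_le : forall x, -1 <= x <= 1 -> Gamma1 K x <= Gm;
  argmax_eq : forall x, -1 <= x <= 1 -> Gamma1 K x = Gm -> In x Am;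
  argmax_sep : forall a b, In a Am -> In b Am -> a <> b -> 2 * s <= Rabs (a - b);
  argmax_gap : forall eps, 0 < eps -> exists d, 0 < d /\ forall x, -1 <= x <= 1 ->
     (forall a, In a Am -> eps <= Rabs (x - a)) -> Gamma1 K x <= Gm - d
}.

Lemma Gamma1_lt_0 K x : K <= 1 -> -1 <= x <= 1 -> x <> 0 -> Gamma1 K x < 0.
Proof.
  intros HK Hx Hx0; rewrite <- Gamma1_Rabs, <- (Gamma1_0 K).
  assert (0 < Rabs x <= 1) by (split; [apply Rabs_pos_lt | apply Rabs_le]; lra).
  apply Gamma1_decr; try lra.
  intros y Hy; assert (y < artanh y) by (apply artanh_gt_id; lra); nra.
Qed.

Lemma Gamma1_argmax_le_1 K : K <= 1 -> Gamma1_argmax K 0 [0] 1.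
Proof.
  intros HK; split; try lra.
  - exists 0; left; reflexivity.
  - intros a [<- | []]; rewrite Gamma1_0; lra.
  - intros x Hx; destruct (Req_dec x 0) as [-> | H]; [rewrite Gamma1_0; lra |].
    apply Rlt_le, Gamma1_lt_0; auto.
  - intros x Hx E; destruct (Req_dec x 0) as [-> | H]; [left; auto |].
    assert (Gamma1 K x < 0) by (apply Gamma1_lt_0; auto); lra.
  - intros a b [<- | []] [<- | []]; lra.
  - intros eps He; set (e := Rmin eps 1).
    assert (He1 : 0 < e <= 1) by (unfold e; split; [apply Rmin_pos; lra | apply Rmin_r]).
    assert (He2 : e <= eps) by apply Rmin_l.
    exists (- Gamma1 K e); split; [assert (Gamma1 K e < 0) by (apply Gamma1_lt_0; lra); lra |].
    intros x Hx Ha; specialize (Ha 0 (or_introl eq_refl)); rewrite Rminus_0_r in Ha.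
    rewrite <- Gamma1_Rabs; assert (Rabs x <= 1) by (apply Rabs_le; lra).
    destruct (Req_dec (Rabs x) e) as [-> | E]; [lra |].
    assert (Gamma1 K (Rabs x) < Gamma1 K e); [| lra].
    apply Gamma1_decr; try lra.
    intros y Hy; assert (y < artanh y) by (apply artanh_gt_id; lra); nra.
Qed.

Section Gamma1_mode.

Variables K z : R.
Hypothesis Hz : 0 < z < 1.
Hypothesis Hq : artanh_quot z = K.

Lemma Gamma1_lt_mode y : 0 <= y <= 1 -> y <> z -> Gamma1 K y < Gamma1 K z.
Proof.
  intros Hy Hyz; destruct (Rlt_le_dec y z).
  - apply (Gamma1_incr_below K z); auto; lra.
  - apply (Gamma1_decr_above K z); auto; lra.
Qed.

Lemma Gamma1_gap_mode e : 0 < e -> e <= z -> e <= 1 - z -> exists d, 0 < d /\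
  forall y, 0 <= y <= 1 -> e <= Rabs (y - z) -> Gamma1 K y <= Gamma1 K z - d.
Proof.
  intros He0 He1 He2.
  assert (G1 : Gamma1 K (z - e) < Gamma1 K z) by (apply Gamma1_lt_mode; lra).
  assert (G2 : Gamma1 K (z + e) < Gamma1 K z) by (apply Gamma1_lt_mode; lra).
  set (d1 := Gamma1 K z - Gamma1 K (z - e)); set (d2 := Gamma1 K z - Gamma1 K (z + e)).
  exists (Rmin d1 d2); split; [apply Rmin_pos; unfold d1, d2; lra |].
  intros y Hy Hyz; pose proof (Rmin_l d1 d2); pose proof (Rmin_r d1 d2).
  destruct (Rlt_le_dec y z).
  - rewrite Rabs_left in Hyz by lra.
    assert (Gamma1 K y <= Gamma1 K (z - e)); [| unfold d1 in *; lra].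
    destruct (Req_dec y (z - e)) as [-> | ?]; [lra |].
    apply Rlt_le, (Gamma1_incr_below K z); auto; lra.
  - rewrite Rabs_right in Hyz by lra.
    assert (Gamma1 K y <= Gamma1 K (z + e)); [| unfold d2 in *; lra].
    destruct (Req_dec y (z + e)) as [-> | ?]; [lra |].
    apply Rlt_le, (Gamma1_decr_above K z); auto; lra.
Qed.

Lemma Gamma1_argmax_gt_1 : Gamma1_argmax K (Gamma1 K z) [z; - z] z.
Proof.
  assert (Habs : forall x, -1 <= x <= 1 -> 0 <= Rabs x <= 1)
    by (intros x Hx; split; [apply Rabs_pos | apply Rabs_le; lra]).
  split; try lra.
  - exists z; left; reflexivity.
  - intros a [<- | [<- | []]]; (split; [lra |]); [| rewrite <- Gamma1_Rabs, Rabs_Ropp,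
      Rabs_right by lra]; reflexivity.
  - intros x Hx; rewrite <- Gamma1_Rabs.
    destruct (Req_dec (Rabs x) z) as [-> | H]; [lra | apply Rlt_le, Gamma1_lt_mode; auto].
  - intros x Hx E; rewrite <- Gamma1_Rabs in E.
    destruct (Req_dec (Rabs x) z) as [H | H].
    + unfold Rabs in H; destruct (Rcase_abs x); [right; left | left]; lra.
    + assert (Gamma1 K (Rabs x) < Gamma1 K z) by (apply Gamma1_lt_mode; auto); lra.
  - intros a b [<- | [<- | []]] [<- | [<- | []]] H; try (exfalso; apply H; reflexivity);
      [rewrite Rabs_right | rewrite Rabs_left]; lra.
  - intros eps He; set (e := Rmin eps (Rmin z (1 - z))).
    assert (He0 : 0 < e) by (unfold e; repeat apply Rmin_pos; lra).
    assert (He1 : e <= eps) by apply Rmin_l.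
    assert (He2 : e <= z) by (eapply Rle_trans; [apply Rmin_r | apply Rmin_l]).
    assert (He3 : e <= 1 - z) by (eapply Rle_trans; [apply Rmin_r | apply Rmin_r]).
    destruct (Gamma1_gap_mode e He0 He2 He3) as [d [Hd Hgap]].
    exists d; split; auto; intros x Hx Ha.
    rewrite <- Gamma1_Rabs; apply Hgap; [apply Habs; auto |].
    assert (A1 := Ha z (or_introl eq_refl)).
    assert (A2 := Ha (- z) (or_intror (or_introl eq_refl))).
    unfold Rabs at 2; destruct (Rcase_abs x); [| lra].
    replace (- x - z) with (- (x - - z)) by ring; rewrite Rabs_Ropp; lra.
Qed.

End Gamma1_mode.

Lemma Gamma1_argmax_exists K : exists Gm Am s, Gamma1_argmax K Gm Am s.
Proof.
  destruct (Rle_dec K 1) as [H | H].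
  - exists 0, [0], 1; apply Gamma1_argmax_le_1; auto.
  - destruct (artanh_quot_surj K ltac:(lra)) as [z [Hz Hr]].
    exists (Gamma1 K z), [z; - z], z; apply Gamma1_argmax_gt_1; auto.
Qed.

Lemma Gamma_split alpha beta x y : Gamma alpha beta x y =
  (Gamma1 ((alpha + beta) / 2) x + Gamma1 ((alpha + beta) / 2) y) / 2 - alpha / 8 * (x - y) ^ 2.
Proof. unfold Gamma, Gamma1; field. Qed.

Lemma Gamma_diag alpha beta x : Gamma alpha beta x x = Gamma1 ((alpha + beta) / 2) x.
Proof. rewrite Gamma_split; field. Qed.

Section Gamma_argmax.

Variables (alpha beta Gm s : R) (Am : list R).
Hypothesis halpha : 0 <= alpha.
Hypothesis HA : Gamma1_argmax ((alpha + beta) / 2) Gm Am s.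

Let Am_value := argmax_value _ _ _ _ HA.
Let Am_le := argmax_le _ _ _ _ HA.
Let Am_eq := argmax_eq _ _ _ _ HA.

Lemma Gamma_le_argmax x y : in_square x y ->
  Gamma alpha beta x y <= Gm - alpha / 8 * (x - y) ^ 2.
Proof.
  intros [Hx Hy]; rewrite Gamma_split.
  pose proof (Am_le x Hx); pose proof (Am_le y Hy); lra.
Qed.

Lemma is_global_max_iff x y :
  is_global_max alpha beta x y <-> In x Am /\ In y Am /\ (0 < alpha -> x = y).
Proof.
  assert (Hsq := Gamma_le_argmax).
  assert (Hdiag : forall a, In a Am -> in_square a a /\ Gamma alpha beta a a = Gm).
  { intros a Ha; destruct (Am_value a Ha) as [Ha1 Ga].
    split; [split; lra |]; rewrite Gamma_diag; exact Ga. }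
  split.
  - intros [[Hx Hy] Hmax].
    destruct (argmax_inhabited _ _ _ _ HA) as [a Ham].
    destruct (Hdiag a Ham) as [Ha Ga].
    assert (H1 := Hmax a a Ha); rewrite Ga, Gamma_split in H1.
    pose proof (Am_le x Hx); pose proof (Am_le y Hy).
    assert (0 <= alpha / 8 * (x - y) ^ 2) by (apply Rmult_le_pos; [lra | apply pow2_ge_0]).
    split; [| split].
    + apply Am_eq; auto; lra.
    + apply Am_eq; auto; lra.
    + intros Ha0; assert ((x - y) ^ 2 = 0) by nra; nra.
  - intros [Hx [Hy Hxy]].
    destruct (Hdiag x Hx) as [[Hx1 _] Gx]; destruct (Hdiag y Hy) as [[_ Hy1] Gy].
    split; [split; lra |].
    intros y1 y2 Hyy; specialize (Hsq y1 y2 Hyy).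
    assert (0 <= alpha / 8 * (y1 - y2) ^ 2) by (apply Rmult_le_pos; [lra | apply pow2_ge_0]).
    enough (Gamma alpha beta x y = Gm) by lra.
    destruct (Rlt_dec 0 alpha) as [Ha | Ha]; [rewrite <- (Hxy Ha); exact Gx |].
    rewrite Gamma_split, (proj2 (Am_value x Hx)), (proj2 (Am_value y Hy)).
    replace alpha with 0 by lra; field.
Qed.

Lemma near_argmax_or_gap e : 0 < e -> exists d, 0 < d /\ forall x, -1 <= x <= 1 ->
  Gamma1 ((alpha + beta) / 2) x <= Gm - d \/ exists a, In a Am /\ Rabs (x - a) < e.
Proof.
  intros He; destruct (argmax_gap _ _ _ _ HA e He) as [d [Hd Hgap]].
  exists d; split; auto; intros x Hx.
  destruct (classic (exists a, In a Am /\ Rabs (x - a) < e)) as [? | Hn]; [right; auto |].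
  left; apply Hgap; auto; intros a Ha.
  destruct (Rle_dec e (Rabs (x - a))); auto.
  exfalso; apply Hn; exists a; split; auto; lra.
Qed.

Lemma Gamma_near_distinct_argmax y1 y2 a b : in_square y1 y2 -> In a Am -> In b Am ->
  a <> b -> Rabs (y1 - a) <= s / 2 -> Rabs (y2 - b) <= s / 2 ->
  Gamma alpha beta y1 y2 <= Gm - alpha / 8 * s ^ 2.
Proof.
  intros Hsq Ha Hb Hab H1 H2.
  assert (Hsep := argmax_sep _ _ _ _ HA a b Ha Hb Hab).
  replace (a - b) with ((y1 - y2) + ((a - y1) + (y2 - b))) in Hsep by ring.
  pose proof (Rabs_triang (y1 - y2) ((a - y1) + (y2 - b))).
  pose proof (Rabs_triang (a - y1) (y2 - b)).
  rewrite Rabs_minus_sym in H1.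
  assert (s ^ 2 <= (y1 - y2) ^ 2).
  { rewrite <- (pow2_abs (y1 - y2)); apply pow_incr; pose proof (argmax_sep_pos _ _ _ _ HA); lra. }
  pose proof (Gamma_le_argmax y1 y2 Hsq).
  assert (alpha / 8 * s ^ 2 <= alpha / 8 * (y1 - y2) ^ 2) by (apply Rmult_le_compat_l; lra).
  lra.
Qed.

Lemma Gamma_gap eps : 0 < eps -> exists d, 0 < d /\ forall y1 y2, in_square y1 y2 ->
  ~ in_nbhd_M alpha beta eps y1 y2 -> Gamma alpha beta y1 y2 <= Gm - d.
Proof.
  intros He; assert (Hs := argmax_sep_pos _ _ _ _ HA).
  set (e := Rmin eps s); assert (He0 : 0 < e) by (apply Rmin_pos; lra).
  assert (He1 : e <= eps) by apply Rmin_l; assert (He2 : e <= s) by apply Rmin_r.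
  destruct (near_argmax_or_gap (e / 2) ltac:(lra)) as [d [Hd Hnear]].
  assert (Hcases : forall y1 y2, in_square y1 y2 -> ~ in_nbhd_M alpha beta eps y1 y2 ->
            Gamma alpha beta y1 y2 <= Gm - d / 2 \/
            (0 < alpha /\ Gamma alpha beta y1 y2 <= Gm - alpha / 8 * s ^ 2)).
  { intros y1 y2 Hsq Hn; destruct Hsq as [Hy1 Hy2].
    assert (Hal : 0 <= alpha / 8 * (y1 - y2) ^ 2) by (apply Rmult_le_pos; [lra | apply pow2_ge_0]).
    destruct (Hnear y1 Hy1) as [F1 | [a [Ha F1]]];
      [left; rewrite Gamma_split; pose proof (Am_le y2 Hy2); lra |].
    destruct (Hnear y2 Hy2) as [F2 | [b [Hb F2]]];
      [left; rewrite Gamma_split; pose proof (Am_le y1 Hy1); lra |].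
    destruct (classic (0 < alpha /\ a <> b)) as [[Ha0 Hab] | Hc].
    - right; split; auto; apply (Gamma_near_distinct_argmax _ _ a b); auto; try split; auto; lra.
    - exfalso; apply Hn; exists a, b; split.
      + apply is_global_max_iff; repeat split; auto; intros Ha0.
        destruct (Req_dec a b); auto; exfalso; apply Hc; auto.
      + apply Rabs_def2 in F1; apply Rabs_def2 in F2.
        rewrite <- (sqrt_pow2 eps) by lra; apply sqrt_lt_1_alt.
        split; [apply Rplus_le_le_0_compat; apply pow2_ge_0 | nra]. }
  destruct (Rlt_dec 0 alpha) as [Ha0 | Ha0].
  - exists (Rmin (d / 2) (alpha / 8 * s ^ 2)).
    split; [apply Rmin_pos; [lra | apply Rmult_lt_0_compat; [lra | apply pow_lt; lra]] |].
    intros y1 y2 Hsq Hn; pose proof (Rmin_l (d / 2) (alpha / 8 * s ^ 2)).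
    pose proof (Rmin_r (d / 2) (alpha / 8 * s ^ 2)).
    destruct (Hcases y1 y2 Hsq Hn) as [Hg | [_ Hg]]; lra.
  - exists (d / 2); split; [lra |]; intros y1 y2 Hsq Hn.
    destruct (Hcases y1 y2 Hsq Hn) as [Hg | [Hpos _]]; [lra | contradiction].
Qed.

End Gamma_argmax.

(** * Exponential bounds for the Gibbs measure *)

Definition lattice_mag (n a : nat) := 2 * INR a / INR n - 1.

Lemma exp_xlogx_lattice (n c : nat) : (0 < n)%nat ->
  exp (INR n / 2 * xlogx (2 * INR c / INR n)) * INR n ^ c = 2 ^ c * INR c ^ c.
Proof.
  intros Hn; assert (Hn' : 0 < INR n) by (apply lt_0_INR; auto).
  destruct c as [| c'].
  { simpl INR; replace (2 * 0 / INR n) with 0 by (field; lra).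
    rewrite xlogx_nonpos, Rmult_0_r, exp_0 by lra; simpl; ring. }
  set (c := S c'); assert (Hc : 0 < INR c) by (apply lt_0_INR; unfold c; lia).
  assert (Hu : 0 < 2 * INR c / INR n) by (apply Rdiv_lt_0_compat; lra).
  rewrite xlogx_pos by auto.
  replace (INR n / 2 * (2 * INR c / INR n * ln (2 * INR c / INR n)))
    with (INR c * ln (2 * INR c / INR n)) by (field; lra).
  rewrite <- ln_pow, exp_ln, <- !Rpow_mult_distr by (try apply pow_lt; auto).
  f_equal; field; lra.
Qed.

Lemma exp_I_rate_lattice (n a : nat) : (0 < n)%nat -> (a <= n)%nat ->
  exp (INR n * I_rate (lattice_mag n a)) * INR n ^ n
  = 2 ^ n * INR a ^ a * INR (n - a) ^ (n - a).
Proof.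
  intros Hn Ha; assert (Hn' : 0 < INR n) by (apply lt_0_INR; auto).
  unfold I_rate, lattice_mag.
  replace (1 + (2 * INR a / INR n - 1)) with (2 * INR a / INR n) by ring.
  replace (1 - (2 * INR a / INR n - 1)) with (2 * INR (n - a) / INR n)
    by (rewrite minus_INR by auto; field; lra).
  replace (INR n * (/ 2 * xlogx (2 * INR a / INR n) + / 2 * xlogx (2 * INR (n - a) / INR n)))
    with (INR n / 2 * xlogx (2 * INR a / INR n) + INR n / 2 * xlogx (2 * INR (n - a) / INR n))
    by field.
  rewrite exp_plus.
  replace (INR n ^ n) with (INR n ^ a * INR n ^ (n - a)) by (rewrite <- pow_add; f_equal; lia).
  replace (2 ^ n) with (2 ^ a * 2 ^ (n - a)) by (rewrite <- pow_add; f_equal; lia).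
  transitivity ((exp (INR n / 2 * xlogx (2 * INR a / INR n)) * INR n ^ a) *
                (exp (INR n / 2 * xlogx (2 * INR (n - a) / INR n)) * INR n ^ (n - a))); [ring |].
  rewrite !exp_xlogx_lattice by auto; ring.
Qed.

Lemma binom_I_rate_bounds (n a : nat) : (0 < n)%nat -> (a <= n)%nat ->
  binomR n a * exp (INR n * I_rate (lattice_mag n a)) <= 2 ^ n <=
  (INR n + 1) * (binomR n a * exp (INR n * I_rate (lattice_mag n a))).
Proof.
  intros Hn Ha.
  assert (Hnn : 0 < INR n ^ n) by (apply pow_lt, lt_0_INR; auto).
  assert (E : (binomR n a * exp (INR n * I_rate (lattice_mag n a))) * INR n ^ n
              = binom_term n a a * 2 ^ n)
    by (unfold binom_term; rewrite Rmult_assoc, exp_I_rate_lattice by auto; ring).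
  destruct (binom_term_mode_bounds n a Ha) as [B1 B2]; rewrite S_INR in B2.
  assert (0 < 2 ^ n) by (apply pow_lt; lra).
  split; apply (Rmult_le_reg_r (INR n ^ n)); auto.
  - rewrite E, Rmult_comm; apply Rmult_le_compat_l; lra.
  - rewrite Rmult_assoc, E, Rmult_comm, <- Rmult_assoc; apply Rmult_le_compat_r; lra.
Qed.

Lemma lattice_mag_bounds (n a : nat) : (0 < n)%nat -> (a <= n)%nat -> -1 <= lattice_mag n a <= 1.
Proof.
  intros Hn Ha; assert (Hn' : 0 < INR n) by (apply lt_0_INR; auto).
  assert (0 <= INR a <= INR n) by (split; [apply pos_INR | apply le_INR; auto]).
  unfold lattice_mag; split.
  - assert (0 <= 2 * INR a / INR n)
      by (apply Rmult_le_pos; [lra | apply Rlt_le, Rinv_0_lt_compat; lra]).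
    lra.
  - enough (2 * INR a / INR n <= 2) by lra.
    apply (Rmult_le_reg_r (INR n)); auto; unfold Rdiv; rewrite Rmult_assoc, Rinv_l by lra; lra.
Qed.

Lemma nat_near (n : nat) t : 0 <= t <= INR n -> exists k, (k <= n)%nat /\ Rabs (INR k - t) <= 1.
Proof.
  revert t; induction n; intros t Ht.
  - exists 0%nat; split; auto; simpl in *; replace (0 - t) with 0 by lra; rewrite Rabs_R0; lra.
  - destruct (Rle_dec t 1).
    + exists 0%nat; split; [lia |]; simpl; rewrite Rabs_left1 by lra; lra.
    + rewrite S_INR in Ht; destruct (IHn (t - 1) ltac:(lra)) as [k [Hk Hk']].
      exists (S k); split; [lia |].
      rewrite S_INR; replace (INR k + 1 - t) with (INR k - (t - 1)) by ring; auto.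
Qed.

Lemma lattice_mag_near (n : nat) x : (0 < n)%nat -> -1 <= x <= 1 ->
  exists k, (k <= n)%nat /\ Rabs (lattice_mag n k - x) <= 2 / INR n.
Proof.
  intros Hn Hx; assert (Hn' : 0 < INR n) by (apply lt_0_INR; auto).
  destruct (nat_near n (INR n * (1 + x) / 2)) as [k [Hk Hk']].
  { split; [apply Rmult_le_pos; [apply Rmult_le_pos |]; lra |].
    apply (Rmult_le_reg_r 2); [lra |]; unfold Rdiv; rewrite Rmult_assoc, Rinv_l by lra; nra. }
  exists k; split; auto.
  replace (lattice_mag n k - x) with (2 / INR n * (INR k - INR n * (1 + x) / 2))
    by (unfold lattice_mag; field; lra).
  assert (0 < 2 / INR n) by (apply Rdiv_lt_0_compat; lra).
  rewrite Rabs_mult, (Rabs_right (2 / INR n)) by lra.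
  rewrite <- (Rmult_1_r (2 / INR n)) at 2; apply Rmult_le_compat_l; lra.
Qed.

Lemma pow4_le_exp_eventually c : 0 < c ->
  exists n0 : nat, forall n : nat, (n0 <= n)%nat -> (INR n + 1) ^ 4 <= exp (c * INR n).
Proof.
  intros Hc; set (u := c / 5); assert (Hu : 0 < u) by (unfold u; lra).
  assert (Hu5 : 0 < u ^ 5) by (apply pow_lt; auto).
  destruct (INR_unbounded (16 / u ^ 5)) as [m Hm].
  exists (S m); intros n Hn.
  assert (Hn1 : 1 <= INR n) by (replace 1 with (INR 1) by reflexivity; apply le_INR; lia).
  assert (Hnm : INR m <= INR n) by (apply le_INR; lia).
  assert (H16 : 16 < u ^ 5 * INR n).
  { apply (Rmult_lt_reg_l (/ u ^ 5)); [apply Rinv_0_lt_compat; auto |].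
    replace (/ u ^ 5 * (u ^ 5 * INR n)) with (INR n) by (field; lra); unfold Rdiv in Hm; lra. }
  (* [(n + 1)^4 <= (2 n)^4 <= (u n)^5 <= exp (u n)^5 = exp (c n)] *)
  assert (E : exp (c * INR n) = exp (u * INR n) ^ 5).
  { replace (c * INR n) with (u * INR n + (u * INR n + (u * INR n + (u * INR n + u * INR n))))
      by (unfold u; field).
    rewrite !exp_plus; simpl; ring. }
  assert (Hx : u * INR n <= exp (u * INR n)) by (pose proof (exp_ineq1_le (u * INR n)); lra).
  assert (P1 : (u * INR n) ^ 5 <= exp (u * INR n) ^ 5) by (apply pow_incr; nra).
  assert (P2 : (INR n + 1) ^ 4 <= (2 * INR n) ^ 4) by (apply pow_incr; lra).
  assert (P3 : (2 * INR n) ^ 4 <= (u * INR n) ^ 5).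
  { replace ((2 * INR n) ^ 4) with (16 * INR n ^ 4) by ring.
    replace ((u * INR n) ^ 5) with ((u ^ 5 * INR n) * INR n ^ 4) by ring.
    apply Rmult_le_compat_r; [apply pow_le |]; lra. }
  rewrite E; lra.
Qed.

Definition block_weight N alpha beta A B :=
  exp (- (- (beta / (2 * INR N)) * (A ^ 2 + B ^ 2) - (alpha / (2 * INR N)) * (2 * A * B))).

Definition indic (P : Prop) : R := if excluded_middle_informative P then 1 else 0.

Lemma gibbs_prob_lattice N alpha beta S (P : R -> R -> Prop) :
  gibbs_prob N alpha beta S (fun sigma => P (mag1 N S sigma) (mag2 N S sigma))
  = lattice_sum (card_block N S) (card_coblock N S)
      (fun A B => indic (P (2 / INR N * A) (2 / INR N * B)) * block_weight N alpha beta A B)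
    / lattice_sum (card_block N S) (card_coblock N S) (block_weight N alpha beta).
Proof.
  unfold gibbs_prob, partition_fn; rewrite <- !sumR_cube_blocks.
  f_equal; apply sumR_ext; intros sigma _; unfold weight, block_weight, indic;
    rewrite Ham_blocks; [| reflexivity].
  destruct excluded_middle_informative; unfold mag1, mag2;
    fold (block_in S N sigma) (block_out S N sigma);
    ring.
Qed.

Lemma block_weight_lattice N n alpha beta a b : INR N = 2 * INR n -> (0 < n)%nat ->
  block_weight N alpha beta (2 * INR a - INR n) (2 * INR b - INR n) =
  exp (INR N * Gamma alpha beta (lattice_mag n a) (lattice_mag n b))
  * exp (INR n * I_rate (lattice_mag n a)) * exp (INR n * I_rate (lattice_mag n b)).
Proof.
  intros HN Hn; assert (0 < INR n) by (apply lt_0_INR; auto).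
  unfold block_weight; rewrite <- !exp_plus; f_equal.
  unfold Gamma, lattice_mag; rewrite HN; field; lra.
Qed.

Lemma mag_lattice N n a : INR N = 2 * INR n -> (0 < n)%nat ->
  2 / INR N * (2 * INR a - INR n) = lattice_mag n a.
Proof.
  intros HN Hn; assert (0 < INR n) by (apply lt_0_INR; auto).
  unfold lattice_mag; rewrite HN; field; lra.
Qed.

Lemma lattice_term_bounds N n alpha beta a b : INR N = 2 * INR n -> (0 < n)%nat ->
  (a <= n)%nat -> (b <= n)%nat ->
  let G := exp (INR N * Gamma alpha beta (lattice_mag n a) (lattice_mag n b)) in
  let t := binomR n a * (binomR n b
             * block_weight N alpha beta (2 * INR a - INR n) (2 * INR b - INR n)) in
  2 ^ n * 2 ^ n * G <= (INR n + 1) ^ 2 * t /\ t <= 2 ^ n * 2 ^ n * G.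
Proof.
  intros HN Hn Ha Hb G t.
  assert (E : t = (binomR n a * exp (INR n * I_rate (lattice_mag n a)))
                  * (binomR n b * exp (INR n * I_rate (lattice_mag n b))) * G)
    by (unfold t, G; rewrite block_weight_lattice by auto; ring).
  destruct (binom_I_rate_bounds n a Hn Ha) as [Ua La].
  destruct (binom_I_rate_bounds n b Hn Hb) as [Ub Lb].
  assert (0 < G) by apply exp_pos.
  assert (0 <= binomR n a * exp (INR n * I_rate (lattice_mag n a)))
    by (apply Rmult_le_pos; [apply binomR_nonneg | apply Rlt_le, exp_pos]).
  assert (0 <= binomR n b * exp (INR n * I_rate (lattice_mag n b)))
    by (apply Rmult_le_pos; [apply binomR_nonneg | apply Rlt_le, exp_pos]).
  assert (0 <= 2 ^ n) by (apply pow_le; lra).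
  rewrite E; split.
  - replace ((INR n + 1) ^ 2 * _) with
      ((INR n + 1) * (binomR n a * exp (INR n * I_rate (lattice_mag n a)))
       * ((INR n + 1) * (binomR n b * exp (INR n * I_rate (lattice_mag n b)))) * G) by ring.
    apply Rmult_le_compat_r; [lra |]; apply Rmult_le_compat; lra.
  - apply Rmult_le_compat_r; [lra |]; apply Rmult_le_compat; lra.
Qed.

Lemma lattice_sum_le n g Q : (forall a b, (a <= n)%nat -> (b <= n)%nat ->
    binomR n a * (binomR n b * g (2 * INR a - INR n) (2 * INR b - INR n)) <= Q) ->
  lattice_sum n n g <= (INR n + 1) ^ 2 * Q.
Proof.
  intros H; unfold lattice_sum.
  replace ((INR n + 1) ^ 2 * Q) with (INR (S n) * (INR (S n) * Q)) by (rewrite S_INR; ring).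
  eapply Rle_trans; [apply (sumR_le_length_mul _ _ (INR (S n) * Q)) | rewrite length_seq; lra].
  intros a Ha; apply in_seq0 in Ha; rewrite <- sumR_scal.
  eapply Rle_trans; [apply (sumR_le_length_mul _ _ Q) | rewrite length_seq; lra].
  intros b Hb; apply in_seq0 in Hb.
  eapply Rle_trans; [| apply (H a b); lia]; right; ring.
Qed.

Lemma lattice_sum_ge_diag n g k :
  (forall a b, (a <= n)%nat -> (b <= n)%nat -> 0 <= g (2 * INR a - INR n) (2 * INR b - INR n)) ->
  (k <= n)%nat ->
  binomR n k * (binomR n k * g (2 * INR k - INR n) (2 * INR k - INR n)) <= lattice_sum n n g.
Proof.
  intros H Hk; unfold lattice_sum.
  assert (Hterm : forall a b, In a (seq 0 (S n)) -> In b (seq 0 (S n)) ->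
                    0 <= binomR n b * g (2 * INR a - INR n) (2 * INR b - INR n)).
  { intros a b Ha Hb; apply in_seq0 in Ha; apply in_seq0 in Hb.
    apply Rmult_le_pos; [apply binomR_nonneg | apply H; lia]. }
  eapply Rle_trans; [| apply (sumR_ge_elem _ _ k)].
  - apply Rmult_le_compat_l; [apply binomR_nonneg |].
    apply (sumR_ge_elem _ (fun b => binomR n b * g (2 * INR k - INR n) (2 * INR b - INR n)) k);
      [intros; apply Hterm; auto |]; apply in_seq0; lia.
  - intros a Ha; apply Rmult_le_pos; [apply binomR_nonneg |].
    apply sumR_nonneg; intros; apply Hterm; auto.
  - apply in_seq0; lia.
Qed.

Lemma lattice_sum_nonneg n g : (forall A B, 0 <= g A B) -> 0 <= lattice_sum n n g.
Proof.
  intros H; unfold lattice_sum; apply sumR_nonneg; intros.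
  apply Rmult_le_pos; [apply binomR_nonneg |]; apply sumR_nonneg; intros.
  apply Rmult_le_pos; [apply binomR_nonneg | apply H].
Qed.

Lemma Rdiv_le_of_bounds X Z u A c : 0 <= X -> 0 < c -> 0 < u ->
  X <= u * A -> c <= u * Z -> X / Z <= u * u * (A / c).
Proof.
  intros HX Hc Hu HXA HZ.
  assert (HZ0 : 0 < Z) by (apply (Rmult_lt_reg_l u); lra).
  assert (Hinv : / Z <= u / c).
  { apply (Rmult_le_reg_l (Z * c)); [apply Rmult_lt_0_compat; lra |].
    replace (Z * c * / Z) with c by (field; lra).
    replace (Z * c * (u / c)) with (u * Z) by (field; lra); lra. }
  unfold Rdiv at 1; eapply Rle_trans; [apply Rmult_le_compat_l; [exact HX | exact Hinv] |].
  replace (u * u * (A / c)) with (u * A * (u / c)) by (field; lra).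
  apply Rmult_le_compat_r; [apply Rlt_le, Rdiv_lt_0_compat |]; lra.
Qed.

Lemma gibbs_prob_mag_le N n alpha beta S (P : R -> R -> Prop) G k :
  valid_block N S -> card_block N S = n -> (0 < n)%nat -> (k <= n)%nat ->
  (forall a b, (a <= n)%nat -> (b <= n)%nat -> P (lattice_mag n a) (lattice_mag n b) ->
     Gamma alpha beta (lattice_mag n a) (lattice_mag n b) <= G) ->
  gibbs_prob N alpha beta S (fun sigma => P (mag1 N S sigma) (mag2 N S sigma))
  <= (INR n + 1) ^ 4
     * exp (INR N * (G - Gamma alpha beta (lattice_mag n k) (lattice_mag n k))).
Proof.
  intros [_ Hcard] Hn Hn0 Hk HG.
  assert (HNn : INR N = 2 * INR n) by (rewrite <- Hcard, Hn, mult_INR; reflexivity).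
  assert (Hco : card_coblock N S = n) by (pose proof (card_block_add_coblock N S); lia).
  rewrite gibbs_prob_lattice, Hn, Hco.
  set (Gk := Gamma alpha beta (lattice_mag n k) (lattice_mag n k)).
  assert (H4 : 0 < 2 ^ n * 2 ^ n) by (apply Rmult_lt_0_compat; apply pow_lt; lra).
  assert (Hn1 : 0 < INR n + 1) by (pose proof (pos_INR n); lra).
  replace ((INR n + 1) ^ 4 * exp (INR N * (G - Gk))) with
    ((INR n + 1) ^ 2 * (INR n + 1) ^ 2
     * (2 ^ n * 2 ^ n * exp (INR N * G) / (2 ^ n * 2 ^ n * exp (INR N * Gk)))).
  2:{ replace (INR N * (G - Gk)) with (INR N * G + - (INR N * Gk)) by ring.
      rewrite exp_plus, exp_Ropp; field.
      split; [apply Rgt_not_eq, exp_pos | apply pow_nonzero; lra]. }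
  apply Rdiv_le_of_bounds.
  - apply lattice_sum_nonneg; intros; unfold indic; destruct excluded_middle_informative;
      [rewrite Rmult_1_l; apply Rlt_le, exp_pos | lra].
  - apply Rmult_lt_0_compat; [lra | apply exp_pos].
  - apply pow_lt; lra.
  - apply lattice_sum_le; intros a b Ha Hb.
    destruct (lattice_term_bounds N n alpha beta a b HNn Hn0 Ha Hb) as [_ Hup].
    rewrite !mag_lattice by auto; unfold indic; destruct excluded_middle_informative as [p | _].
    + rewrite Rmult_1_l; eapply Rle_trans; [exact Hup |].
      apply Rmult_le_compat_l; [lra |].
      apply exp_le_compat, Rmult_le_compat_l; [apply pos_INR | apply HG; auto].
    + rewrite Rmult_0_l, !Rmult_0_r; pose proof (exp_pos (INR N * G)); nra.
  - destruct (lattice_term_bounds N n alpha beta k k HNn Hn0 Hk Hk) as [Hlow _].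
    eapply Rle_trans; [exact Hlow |]; apply Rmult_le_compat_l; [apply pow_le; lra |].
    apply lattice_sum_ge_diag; auto; intros; apply Rlt_le, exp_pos.
Qed.

(** * Concentration and weak convergence *)

Definition mag_concentrates alpha beta : Prop :=
  forall eps, 0 < eps -> exists c, 0 < c /\ exists N0 : nat,
     forall (N : nat) (S : nat -> bool), (N0 <= N)%nat -> valid_block N S ->
       gibbs_prob N alpha beta S
         (fun sigma => ~ in_nbhd_M alpha beta eps (mag1 N S sigma) (mag2 N S sigma))
       <= exp (- c * INR N).

Lemma lattice_near_argmax K Gm Am s d : Gamma1_argmax K Gm Am s -> 0 < d ->
  exists n0 : nat, forall n : nat, (n0 <= n)%nat ->
    exists k, (k <= n)%nat /\ Gm - d <= Gamma1 K (lattice_mag n k).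
Proof.
  intros HA Hd.
  destruct (argmax_inhabited _ _ _ _ HA) as [a0 Ha0].
  destruct (argmax_value _ _ _ _ HA a0 Ha0) as [Ha0_sq Ga0].
  destruct (continuity_pt_eps (Gamma1 K) a0 (Gamma1_continuity_pt K a0) d Hd)
    as [dc [Hdc Hcont]].
  destruct (INR_unbounded (2 / dc)) as [n0 Hn0].
  exists (S n0); intros n Hn.
  assert (Hnn : INR n0 < INR n) by (apply lt_INR; lia); pose proof (pos_INR n0).
  destruct (lattice_mag_near n a0 ltac:(lia) Ha0_sq) as [k [Hk Hka]].
  exists k; split; auto.
  assert (2 / INR n < dc).
  { apply (Rmult_lt_reg_r (INR n)); [lra |].
    apply (Rmult_lt_reg_l (/ dc)); [apply Rinv_0_lt_compat; auto |].
    replace (/ dc * (2 / INR n * INR n)) with (2 / dc) by (field; lra).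
    replace (/ dc * (dc * INR n)) with (INR n) by (field; lra); lra. }
  assert (Hc := Hcont (lattice_mag n k) ltac:(lra)); rewrite Ga0 in Hc.
  apply Rabs_def2 in Hc; lra.
Qed.

Lemma gibbs_prob_far_from_argmax alpha beta Gm Am s : 0 <= alpha ->
  Gamma1_argmax ((alpha + beta) / 2) Gm Am s -> mag_concentrates alpha beta.
Proof.
  intros Ha HA eps He.
  destruct (Gamma_gap alpha beta Gm s Am Ha HA eps He) as [d [Hd Hgap]].
  destruct (lattice_near_argmax _ _ _ _ (d / 4) HA ltac:(lra)) as [n1 Hn1].
  destruct (pow4_le_exp_eventually d Hd) as [n2 Hn2].
  exists (d / 4); split; [lra |]; exists (2 * S (n1 + n2))%nat.
  intros N Sb HN Hv; set (n := card_block N Sb).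
  assert (HNn : N = (2 * n)%nat) by (destruct Hv; unfold n; lia).
  assert (HNR : INR N = 2 * INR n) by (rewrite HNn, mult_INR; reflexivity).
  destruct (Hn1 n ltac:(lia)) as [k [Hk Hnear]]; rewrite <- Gamma_diag in Hnear.
  eapply Rle_trans;
    [apply (gibbs_prob_mag_le N n alpha beta Sb (fun y1 y2 => ~ in_nbhd_M alpha beta eps y1 y2)
            (Gm - d) k); auto; try lia |].
  { intros a b Ha' Hb' Hfar; apply Hgap; auto; split; apply lattice_mag_bounds; auto; lia. }
  (* [(n + 1)^4 <= exp (d n) = exp (d N / 2)] absorbs the polynomial factor. *)
  eapply Rle_trans; [apply Rmult_le_compat_r; [apply Rlt_le, exp_pos | apply Hn2; lia] |].
  rewrite <- exp_plus; apply exp_le_compat.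
  assert (0 <= INR N) by apply pos_INR; nra.
Qed.

Lemma partition_fn_pos N alpha beta S : 0 < partition_fn N alpha beta S.
Proof.
  unfold partition_fn.
  assert (Hne : exists sigma, In sigma (cube N)).
  { induction N; simpl; [exists []; auto |].
    destruct IHN as [s Hs]; exists (true :: s); apply in_or_app; left; apply in_map; auto. }
  destruct Hne as [s Hs].
  eapply Rlt_le_trans; [apply exp_pos |].
  apply (sumR_ge_elem _ (weight N alpha beta S) s); auto; intros; apply Rlt_le, exp_pos.
Qed.

Lemma gibbs_exp_dev_le N alpha beta S F c e B (P : list bool -> Prop) : 0 <= e ->
  (forall sigma, P sigma -> Rabs (F sigma - c) <= e) ->
  (forall sigma, Rabs (F sigma - c) <= B) ->
  Rabs (gibbs_exp N alpha beta S F - c)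
  <= e + B * gibbs_prob N alpha beta S (fun sigma => ~ P sigma).
Proof.
  intros He HP HB; unfold gibbs_exp, gibbs_prob.
  assert (HZ := partition_fn_pos N alpha beta S); unfold partition_fn in *.
  set (w := weight N alpha beta S) in *.
  assert (Hw : forall sigma, 0 < w sigma) by (intros; apply exp_pos).
  replace (sumR (cube N) (fun sigma => F sigma * w sigma) / sumR (cube N) w - c)
    with (sumR (cube N) (fun sigma => (F sigma - c) * w sigma) / sumR (cube N) w).
  2:{ rewrite (sumR_ext _ (fun sigma => (F sigma - c) * w sigma)
                 (fun sigma => F sigma * w sigma + - c * w sigma)) by (intros; ring).
      rewrite sumR_plus, sumR_scal; field; lra. }
  unfold Rdiv; rewrite Rabs_mult, (Rabs_right (/ _))
    by (apply Rle_ge, Rlt_le, Rinv_0_lt_compat; auto).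
  replace (e + B * (_ * / _)) with
    ((e * sumR (cube N) w + B * sumR (cube N) (fun sigma =>
        match excluded_middle_informative (~ P sigma) with
        | left _ => w sigma | right _ => 0 end)) * / sumR (cube N) w) by (field; lra).
  apply Rmult_le_compat_r; [apply Rlt_le, Rinv_0_lt_compat; auto |].
  eapply Rle_trans; [apply sumR_abs |].
  rewrite <- !sumR_scal, <- sumR_plus; apply sumR_le; intros sigma _.
  rewrite Rabs_mult, (Rabs_right (w sigma)) by (apply Rle_ge, Rlt_le; auto).
  assert (Hws := Hw sigma).
  destruct excluded_middle_informative as [p | p].
  - pose proof (HB sigma); pose proof (Rabs_pos (F sigma - c)).
    nra.
  - apply NNPP in p; pose proof (HP sigma p); nra.
Qed.

Lemma exp_neg_lt_eventually c B e : 0 < c -> 0 <= B -> 0 < e ->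
  exists N1 : nat, forall N : nat, (N1 <= N)%nat -> B * exp (- c * INR N) < e.
Proof.
  intros Hc HB He; destruct (INR_unbounded ((B + 1) / (c * e))) as [N1 HN1].
  exists N1; intros N HN; assert (INR N1 <= INR N) by (apply le_INR; auto).
  assert (HcN : B + 1 < c * e * INR N).
  { apply (Rmult_lt_reg_l (/ (c * e))); [apply Rinv_0_lt_compat, Rmult_lt_0_compat; auto |].
    replace (/ (c * e) * (c * e * INR N)) with (INR N) by (field; lra).
    unfold Rdiv in HN1; lra. }
  (* [B < B + 1 < c e N < e exp (c N)] *)
  pose proof (exp_ineq1_le (c * INR N)).
  replace (- c * INR N) with (- (c * INR N)) by ring; rewrite exp_Ropp.
  apply (Rmult_lt_reg_r (exp (c * INR N))); [apply exp_pos |].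
  rewrite Rmult_assoc, Rinv_l by (apply Rgt_not_eq, exp_pos); nra.
Qed.

Lemma Rabs_le_sqrt_sum_sq x y : Rabs x <= sqrt (x ^ 2 + y ^ 2).
Proof.
  replace (Rabs x) with (sqrt (x ^ 2)) by (rewrite <- pow2_abs; apply sqrt_pow2, Rabs_pos).
  apply sqrt_le_1_alt; pose proof (pow2_ge_0 y); lra.
Qed.

Lemma gibbs_exp_mag_tendsto alpha beta x1 x2 : mag_concentrates alpha beta ->
  (forall y1 y2, is_global_max alpha beta y1 y2 <-> (y1 = x1 /\ y2 = x2)) ->
  forall f : R -> R -> R, continuous2 f -> bounded2 f ->
  forall e, 0 < e -> exists N0 : nat,
    forall (N : nat) (S : nat -> bool), (N0 <= N)%nat -> valid_block N S ->
      Rabs (gibbs_exp N alpha beta S (fun sigma => f (mag1 N S sigma) (mag2 N S sigma))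
            - f x1 x2) < e.
Proof.
  intros Hconc Hmax f Hf [B HB] e He.
  assert (HB0 : 0 <= B) by (eapply Rle_trans; [apply Rabs_pos | apply (HB 0 0)]).
  destruct (Hf x1 x2 (e / 2) ltac:(lra)) as [dl [Hdl Hcf]].
  destruct (Hconc dl Hdl) as [c [Hc [N0 HN0]]].
  destruct (exp_neg_lt_eventually c (2 * B) (e / 2) Hc ltac:(lra) ltac:(lra)) as [N1 HN1].
  exists (N0 + N1)%nat; intros N S HN Hv.
  eapply Rle_lt_trans.
  { apply (gibbs_exp_dev_le _ _ _ _ _ _ (e / 2) (2 * B)
             (fun sigma => in_nbhd_M alpha beta dl (mag1 N S sigma) (mag2 N S sigma))).
    - lra.
    - intros sigma [y1 [y2 [Hy Hd]]]; apply Hmax in Hy; destruct Hy as [-> ->].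
      assert (D1 := Rabs_le_sqrt_sum_sq (mag1 N S sigma - x1) (mag2 N S sigma - x2)).
      assert (D2 := Rabs_le_sqrt_sum_sq (mag2 N S sigma - x2) (mag1 N S sigma - x1)).
      rewrite Rplus_comm in D2; apply Rlt_le, Hcf; lra.
    - intros sigma; unfold Rminus; eapply Rle_trans; [apply Rabs_triang |].
      rewrite Rabs_Ropp; pose proof (HB (mag1 N S sigma) (mag2 N S sigma)); pose proof (HB x1 x2).
      lra. }
  assert (Hp := HN0 N S ltac:(lia) Hv); assert (Hs := HN1 N ltac:(lia)).
  assert (2 * B * gibbs_prob N alpha beta S
            (fun sigma => ~ in_nbhd_M alpha beta dl (mag1 N S sigma) (mag2 N S sigma))
          <= 2 * B * exp (- c * INR N)) by (apply Rmult_le_compat_l; lra).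
  lra.
Qed.

(** If, say, [|x2| <= |x1|] and [x1 <> 0], then
    [|artanh x1| > |x1| >= (beta |x1| + alpha |x2|) / 2]. *)
Lemma critical_point_eq_0 alpha beta x1 x2 : 0 <= alpha -> 0 < beta -> alpha + beta <= 2 ->
  -1 < x1 < 1 -> -1 < x2 < 1 ->
  / 2 * beta * x1 + / 2 * alpha * x2 = artanh x1 ->
  / 2 * beta * x2 + / 2 * alpha * x1 = artanh x2 -> x1 = 0 /\ x2 = 0.
Proof.
  intros Ha Hb Hab Hx1 Hx2 E1 E2.
  assert (lin : forall u v, Rabs (/ 2 * beta * u + / 2 * alpha * v)
                            <= / 2 * beta * Rabs u + / 2 * alpha * Rabs v).
  { intros u v; eapply Rle_trans; [apply Rabs_triang |].
    rewrite !Rabs_mult, (Rabs_right (/ 2)), (Rabs_right beta), (Rabs_right alpha) by lra; lra. }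
  pose proof (Rabs_pos x1); pose proof (Rabs_pos x2).
  destruct (Req_dec x1 0) as [-> | H1]; destruct (Req_dec x2 0) as [-> | H2]; auto; exfalso.
  - pose proof (Rabs_lt_Rabs_artanh x2 Hx2 H2); pose proof (lin x2 0); rewrite <- E2 in *.
    rewrite Rabs_R0 in *; nra.
  - pose proof (Rabs_lt_Rabs_artanh x1 Hx1 H1); pose proof (lin x1 0); rewrite <- E1 in *.
    rewrite Rabs_R0 in *; nra.
  - pose proof (Rabs_lt_Rabs_artanh x1 Hx1 H1); pose proof (Rabs_lt_Rabs_artanh x2 Hx2 H2).
    pose proof (lin x1 x2); pose proof (lin x2 x1); rewrite <- E1, <- E2 in *.
    destruct (Rle_dec (Rabs x2) (Rabs x1)); nra.
Qed.

Theorem mainTheorem2 (alpha beta : R) (hbeta : 0 < beta)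
  (halpha : 0 <= alpha) (hab : alpha <= beta) :
  (forall eps, 0 < eps -> exists c, 0 < c /\ exists N0 : nat,
     forall (N : nat) (S : nat -> bool), (N0 <= N)%nat -> valid_block N S ->
       gibbs_prob N alpha beta S
         (fun sigma => ~ in_nbhd_M alpha beta eps (mag1 N S sigma) (mag2 N S sigma))
       <= exp (- c * INR N))
  /\
  (alpha + beta <= 2 ->
     (0 < alpha -> forall x1 x2, -1 < x1 < 1 -> -1 < x2 < 1 ->
        / 2 * beta * x1 + / 2 * alpha * x2 = artanh x1 ->
        / 2 * beta * x2 + / 2 * alpha * x1 = artanh x2 ->
        x1 = 0 /\ x2 = 0)
     /\ (forall x1 x2, is_global_max alpha beta x1 x2 <-> (x1 = 0 /\ x2 = 0))
     /\ (forall f : R -> R -> R, continuous2 f -> bounded2 f ->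
          forall e, 0 < e -> exists N0 : nat,
            forall (N : nat) (S : nat -> bool), (N0 <= N)%nat -> valid_block N S ->
              Rabs (gibbs_exp N alpha beta S (fun sigma => f (mag1 N S sigma) (mag2 N S sigma))
                    - f 0 0) < e))
  /\
  (2 < alpha + beta -> 0 < alpha ->
     exists mstar, 0 < mstar /\ tanh ((alpha + beta) / 2 * mstar) = mstar /\
       (forall z, 0 < z -> tanh ((alpha + beta) / 2 * z) = z -> z = mstar) /\
       (forall x1 x2, is_global_max alpha beta x1 x2 <->
          ((x1 = mstar /\ x2 = mstar) \/ (x1 = - mstar /\ x2 = - mstar)))).
Proof.
  set (K := (alpha + beta) / 2).
  assert (Hconc : mag_concentrates alpha beta).
  { destruct (Gamma1_argmax_exists K) as (Gm & Am & s & HA).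
    apply (gibbs_prob_far_from_argmax alpha beta Gm Am s halpha HA). }
  split; [exact Hconc | split].
  - intros Hsmall.
    assert (Hmax : forall x1 x2, is_global_max alpha beta x1 x2 <-> (x1 = 0 /\ x2 = 0)).
    { intros x1 x2.
      rewrite (is_global_max_iff _ _ _ _ _ halpha (Gamma1_argmax_le_1 K ltac:(unfold K; lra))).
      split; [intros [[<- | []] [[<- | []] _]] | intros [-> ->]]; repeat split; auto; left; auto. }
    split; [| split; [exact Hmax |]].
    + intros; apply (critical_point_eq_0 alpha beta); auto.
    + apply gibbs_exp_mag_tendsto; auto.
  - intros Hlarge Ha.
    destruct (artanh_quot_surj K ltac:(unfold K; lra)) as [z [Hz Hq]].
    exists z; split; [lra | split; [| split]].
    + apply (tanh_fixpoint_iff K z ltac:(lra)); split; [lra | exact Hq].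
    + intros z' Hz' Hfix; apply tanh_fixpoint_iff in Hfix as [Hz'1 Hq']; auto.
      apply artanh_quot_inj; [lra | lra | congruence].
    + intros x1 x2; rewrite (is_global_max_iff _ _ _ _ _ halpha (Gamma1_argmax_gt_1 K z Hz Hq)).
      split.
      * intros [H1 [_ Hxy]]; rewrite <- (Hxy Ha).
        destruct H1 as [<- | [<- | []]]; [left | right]; auto.
      * intros [[-> ->] | [-> ->]]; repeat split; simpl; auto.
Qed.
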